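(* Let $\kappa=\beth_\kappa$ and let $\tau$ be a vocabulary. (Product) For $\tau$-models $M_1,M_2,N_1,N_2$: if $M_\ell$ and $N_\ell$ satisfy the same sentences of $\mathbb L^1_\kappa(\tau)$ for $\ell=1,2$, then $M_1\times M_2$ and $N_1\times N_2$ satisfy the same sentences of $\mathbb L^1_\kappa(\tau)$. Moreover, for $\theta<\kappa$ and $\alpha<\theta^+$: if $M_\ell\,\mathscr E^1_{\mathrm{qf}(\tau),\theta,\alpha}\,N_\ell$ for $\ell=1,2$ then $M_1\times M_2\,\mathscr E^1_{\mathrm{qf}(\tau),\theta,\alpha}\,N_1\times N_2$. (Sum) If $\tau$ has no function symbols, $M_1,M_2$ have disjoint universes and $N_1,N_2$ have disjoint universes, and $M_\ell$, $N_\ell$ satisfy the same $\mathbb L^1_\kappa(\tau)$-sentences for $\ell=1,2$, then $M_1+M_2$ and $N_1+N_2$ satisfy the same $\mathbb L^1_\kappa(\tau)$-sentences; and the same holds with $\mathscr E^1_{\mathrm{qf}(\tau),\theta,\alpha}$-equivalence ($\theta<\kappa$, $\alpha<\theta^+$) in place of $\mathbb L^1_\kappa$-equivalence.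
   Context: Product $M_1\times M_2$ of $\tau$-models: universe $|M_1|\times|M_2|$, each predicate $P$ holds of a tuple of pairs iff $P^{M_1}$ holds of the tuple of first coordinates and $P^{M_2}$ of the tuple of second coordinates, and function symbols act coordinatewise. Sum $M_1+M_2$ (disjoint universes, relational $\tau$): universe $|M_1|\cup|M_2|$, $P^{M_1+M_2}=P^{M_1}\cup P^{M_2}$. The game $\Game_{\Gamma,\theta,\alpha}[M_1,M_2]$: states are tuples $(A^1,A^2,h^1,h^2,g,\beta,n)$ with $A^\ell\subseteq M_\ell$, $|A^\ell|\le\theta$, $\beta\le\alpha$, $n<\omega$, $h^\ell:A^\ell\to\omega$, $g$ a partial injection $M_1\to M_2$ with $g^1=g,g^2=g^{-1}$, $\mathrm{Dom}(g^\ell)\subseteq A^\ell$, $g$ preserving every formula of $\Gamma$, and $h^\ell(a)<n$ on $\mathrm{Dom}(g^\ell)$. Start: $(\emptyset,\emptyset,\emptyset,\emptyset,\emptyset,\alpha,0)$. At state $\mathbf s_n$, AIS picks $\iota\in\{1,2\}$, $\beta_{n+1}<\beta_n$, $A'$ with $A^\iota_n\subseteq A'\subseteq M_\iota$, $|A'|\le\theta$; ISO picks a state $\mathbf s_{n+1}$ with index $n+1$ and ordinal $\beta_{n+1}$ extending $\mathbf s_n$ coordinatewise, with $A^\iota_{n+1}=A'$, $A^{3-\iota}_{n+1}=A^{3-\iota}_n\cup\mathrm{Dom}(g^{3-\iota}_{n+1})$, $h^\iota_{n+1}(a)\ge n+1$ for new $a\in A'$, and $\mathrm{Dom}(g^\iota_{n+1})=\{a\in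 A^\iota_n:h^\iota_n(a)<n+1\}$. A player without legal move loses; for $\alpha=0$ ISO wins iff the start is a state. $\mathscr E^0$: ISO has a winning strategy; $\mathscr E^1$: equivalence relation generated by $\mathscr E^0$; $\mathrm{qf}(\tau)$: atomic formulas and negations. $\mathbb L^1_\kappa=\bigcup_{\theta<\kappa}\mathbb L^1_{\le\theta}$; a sentence of $\mathbb L^1_{\le\theta}(\tau)$ is given by $\tau_1\subseteq\tau$, $|\tau_1|\le\theta$, $\alpha<\theta^+$ and at most $\beth_{\alpha+1}(\theta)$ $\tau_1$-models $M_i$; $M\models\psi$ iff $M\restriction\tau_1\,\mathscr E^1_{\mathrm{qf}(\tau_1),\theta,\alpha}\,M_i$ for some $i$. *)

From Stdlib Require Import Classical ClassicalEpsilon Relations Wellfounded Fin.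

Definition card_le (A B : Type) : Prop := exists f : A -> B, forall x y, f x = f y -> x = y.
Definition card_lt (A B : Type) : Prop := card_le A B /\ ~ card_le B A.
Definition card_eq (A B : Type) : Prop := card_le A B /\ card_le B A.

Record WellOrder := {
  wcar : Type;
  wlt : wcar -> wcar -> Prop;
  wlt_wf : well_founded wlt;
  wlt_trans : forall x y z, wlt x y -> wlt y z -> wlt x z;
  wlt_total : forall x y, wlt x y \/ x = y \/ wlt y x }.

(** Ordinals beta <= alpha: [Some x] is the ordinal of the initial segment
    below x, [None] is alpha itself. *)
Definition olt (W : WellOrder) (a b : option (wcar W)) : Prop :=
  match a, b with
  | Some x, Some y => wlt W x y
  | Some _, None => True
  | None, _ => False
  end.

Lemma olt_wf (W : WellOrder) : well_founded (olt W).
Proof.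
  assert (HS : forall x, Acc (olt W) (Some x)).
  { intro x. induction (wlt_wf W x) as [x _ IH].
    constructor. intros [y|] Hy; simpl in Hy.
    - apply IH; exact Hy.
    - contradiction. }
  intros [x|]; [apply HS|].
  constructor. intros [y|] Hy; [apply HS| simpl in Hy; contradiction].
Qed.

(** * Beth numbers: [beth th W b] is a type of cardinality beth_b(th),
    by recursion on the ordinal b <= W:
    beth_0 = th, beth_{b+1} = 2^{beth_b}, beth_d = sup_{b<d} beth_b (d limit). *)
Definition beth_step (th : Type) (W : WellOrder) (x : option (wcar W))
  (rec : forall y, olt W y x -> Type) : Type :=
  match excluded_middle_informative (exists y, olt W y x) with
  | right _ => th
  | left _ =>
    match excluded_middle_informative
            (exists y, olt W y x /\ forall z, olt W z x -> olt W z y \/ z = y) with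
    | left H =>
        let (y, Hy) := constructive_indefinite_description _ H in
        (rec y (proj1 Hy) -> Prop)
    | right _ => { y : option (wcar W) & { r : olt W y x & rec y r } }
    end
  end.

Definition beth (th : Type) (W : WellOrder) : option (wcar W) -> Type :=
  Fix (olt_wf W) (fun _ => Type) (beth_step th W).

(** kappa = beth_kappa (with beth_0 = aleph_0): K carries a well-order W whose
    order type is the initial ordinal of |K| and |K| = beth_{W}(aleph_0). *)
Definition beth_fixed_point (K : Type) : Prop :=
  exists W : WellOrder,
    card_eq (wcar W) K /\
    (forall x : wcar W, ~ card_le K { y : wcar W | wlt W y x }) /\
    card_eq K (beth nat W None).

Record vocab := {
  psym : Type; parity : psym -> nat;
  fsym : Type; farity : fsym -> nat }.

Record structure (t : vocab) := {
  car : Type;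
  pint : forall p : psym t, (Fin.t (parity t p) -> car) -> Prop;
  fint : forall f : fsym t, (Fin.t (farity t f) -> car) -> car }.
Arguments car {t} _.
Arguments pint {t} _ _ _.
Arguments fint {t} _ _ _.

Definition subvoc (t : vocab) (SP : psym t -> Prop) (SF : fsym t -> Prop) : vocab := {|
  psym := { p | SP p }; parity := fun p => parity t (proj1_sig p);
  fsym := { f | SF f }; farity := fun f => farity t (proj1_sig f) |}.

Definition reduct (t : vocab) (SP : psym t -> Prop) (SF : fsym t -> Prop)
  (M : structure t) : structure (subvoc t SP SF) := {|
  car := car M;
  pint := fun (p : psym (subvoc t SP SF)) args => pint M (proj1_sig p) args;
  fint := fun (f : fsym (subvoc t SP SF)) args => fint M (proj1_sig f) args |}.

Definition prod_struct (t : vocab) (M1 M2 : structure t) : structure t := {|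
  car := (car M1 * car M2)%type;
  pint := fun p args => pint M1 p (fun i => fst (args i)) /\ pint M2 p (fun i => snd (args i));
  fint := fun f args => (fint M1 f (fun i => fst (args i)), fint M2 f (fun i => snd (args i))) |}.

(** Sum for relational vocabularies; the universes are made disjoint by
    taking the disjoint union type. *)
Definition sum_struct (t : vocab) (H : fsym t -> False) (M1 M2 : structure t) : structure t := {|
  car := (car M1 + car M2)%type;
  pint := fun p args =>
    (exists a, (forall i, args i = inl (a i)) /\ pint M1 p a) \/
    (exists b, (forall i, args i = inr (b i)) /\ pint M2 p b);
  fint := fun f _ => match H f with end |}.

Inductive term (t : vocab) (V : Type) : Type :=
  | Var : V -> term t V
  | App : forall f : fsym t, (Fin.t (farity t f) -> term t V) -> term t V.
Arguments Var {t V} _.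
Arguments App {t V} _ _.

Inductive atomic (t : vocab) (V : Type) : Type :=
  | APred : forall p : psym t, (Fin.t (parity t p) -> term t V) -> atomic t V
  | AEq : term t V -> term t V -> atomic t V.
Arguments APred {t V} _ _.
Arguments AEq {t V} _ _.

Inductive qf (t : vocab) (V : Type) : Type :=
  | QAtom : atomic t V -> qf t V
  | QNeg : atomic t V -> qf t V.
Arguments QAtom {t V} _.
Arguments QNeg {t V} _.

Fixpoint teval {t : vocab} {V : Type} (M : structure t) (a : V -> car M) (u : term t V) : car M :=
  match u with
  | Var v => a v
  | App f args => fint M f (fun i => teval M a (args i))
  end.

Definition asat {t : vocab} {V : Type} (M : structure t) (a : V -> car M) (phi : atomic t V) : Prop :=
  match phi with
  | APred p args => pint M p (fun i => teval M a (args i))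
  | AEq u1 u2 => teval M a u1 = teval M a u2
  end.

Definition qsat {t : vocab} {V : Type} (M : structure t) (a : V -> car M) (phi : qf t V) : Prop :=
  match phi with
  | QAtom psi => asat M a psi
  | QNeg psi => ~ asat M a psi
  end.

Section Game.
Variables (t : vocab) (theta : Type) (alpha : WellOrder).

Record state (M1 M2 : structure t) := {
  sA1 : car M1 -> Prop;
  sA2 : car M2 -> Prop;
  sh1 : car M1 -> nat;   (* h^1, relevant on A^1 only *)
  sh2 : car M2 -> nat;   (* h^2, relevant on A^2 only *)
  sg : car M1 -> car M2 -> Prop;  (* graph of the partial injection g *)
  sbeta : option (wcar alpha);
  sn : nat }.
Arguments sA1 {M1 M2} _ _.
Arguments sA2 {M1 M2} _ _.
Arguments sh1 {M1 M2} _ _.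
Arguments sh2 {M1 M2} _ _.
Arguments sg {M1 M2} _ _ _.
Arguments sbeta {M1 M2} _.
Arguments sn {M1 M2} _.

Definition preserves_qf (M1 M2 : structure t) (g : car M1 -> car M2 -> Prop) : Prop :=
  forall (k : nat) (phi : qf t (Fin.t k)) (a : Fin.t k -> car M1) (b : Fin.t k -> car M2),
    (forall i, g (a i) (b i)) -> (qsat M1 a phi <-> qsat M2 b phi).

Definition partial_inj {A B : Type} (g : A -> B -> Prop) : Prop :=
  (forall x y y', g x y -> g x y' -> y = y') /\ (forall x x' y, g x y -> g x' y -> x = x').

Definition is_state (M1 M2 : structure t) (s : state M1 M2) : Prop :=
  card_le { x | sA1 s x } theta /\ card_le { y | sA2 s y } theta /\
  partial_inj (sg s) /\
  (forall x y, sg s x y -> sA1 s x) /\ (forall x y, sg s x y -> sA2 s y) /\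
  preserves_qf M1 M2 (sg s) /\
  (forall x y, sg s x y -> sh1 s x < sn s) /\ (forall x y, sg s x y -> sh2 s y < sn s).

Definition swap (M1 M2 : structure t) (s : state M1 M2) : state M2 M1 := {|
  sA1 := sA2 s; sA2 := sA1 s; sh1 := sh2 s; sh2 := sh1 s;
  sg := fun y x => sg s x y; sbeta := sbeta s; sn := sn s |}.

(** ISO's legal answers s' when AIS played iota = 1, beta' and A'. *)
Definition iso_response (M1 M2 : structure t) (s : state M1 M2)
  (beta' : option (wcar alpha)) (A' : car M1 -> Prop) (s' : state M1 M2) : Prop :=
  is_state M1 M2 s' /\ sn s' = S (sn s) /\ sbeta s' = beta' /\
  (forall x, sA1 s x -> sA1 s' x) /\ (forall y, sA2 s y -> sA2 s' y) /\
  (forall x, sA1 s x -> sh1 s' x = sh1 s x) /\ (forall y, sA2 s y -> sh2 s' y = sh2 s y) /\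
  (forall x y, sg s x y -> sg s' x y) /\
  (forall x, sA1 s' x <-> A' x) /\
  (forall y, sA2 s' y <-> (sA2 s y \/ exists x, sg s' x y)) /\
  (forall x, A' x -> ~ sA1 s x -> S (sn s) <= sh1 s' x) /\
  (forall x, (exists y, sg s' x y) <-> (sA1 s x /\ sh1 s x < S (sn s))).

(** ISO wins from s (the game is well founded as beta decreases, so this
    inductive definition is equivalent to ISO having a winning strategy). *)
Inductive iso_wins (M1 M2 : structure t) (s : state M1 M2) : Prop :=
  | iso_wins_intro :
      (forall (beta' : option (wcar alpha)) (A' : car M1 -> Prop),
          olt alpha beta' (sbeta s) -> (forall x, sA1 s x -> A' x) ->
          card_le { x | A' x } theta ->
          exists s', iso_response M1 M2 s beta' A' s' /\ iso_wins M1 M2 s') ->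
      (forall (beta' : option (wcar alpha)) (A' : car M2 -> Prop),
          olt alpha beta' (sbeta s) -> (forall y, sA2 s y -> A' y) ->
          card_le { y | A' y } theta ->
          exists s', iso_response M2 M1 (swap M1 M2 s) beta' A' (swap M1 M2 s') /\
                     iso_wins M1 M2 s') ->
      iso_wins M1 M2 s.

Definition start_state (M1 M2 : structure t) : state M1 M2 := {|
  sA1 := fun _ => False; sA2 := fun _ => False; sh1 := fun _ => 0; sh2 := fun _ => 0;
  sg := fun _ _ => False; sbeta := None; sn := 0 |}.

Definition E0 (M1 M2 : structure t) : Prop :=
  is_state M1 M2 (start_state M1 M2) /\ iso_wins M1 M2 (start_state M1 M2).

Definition E1 : relation (structure t) := clos_refl_sym_trans (structure t) E0.

End Game.

Record L1sent (t : vocab) (K : Type) := {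
  s_theta : Type;
  s_theta_lt : card_lt s_theta K;
  s_SP : psym t -> Prop;
  s_SF : fsym t -> Prop;
  s_voc_card : card_le ({ p | s_SP p } + { f | s_SF f }) s_theta;
  s_alpha : WellOrder;
  s_alpha_lt : card_le (wcar s_alpha) s_theta;   (* alpha < theta^+ *)
  s_I : Type;
  s_I_card : card_le s_I (beth s_theta s_alpha None -> Prop);  (* <= beth_{alpha+1}(theta) *)
  s_models : s_I -> structure (subvoc t s_SP s_SF) }.
Arguments s_theta {t K} _.
Arguments s_SP {t K} _ _.
Arguments s_SF {t K} _ _.
Arguments s_alpha {t K} _.
Arguments s_I {t K} _.
Arguments s_models {t K} _ _.

Definition L1sat (t : vocab) (K : Type) (M : structure t) (psi : L1sent t K) : Prop :=
  exists i, E1 (subvoc t (s_SP psi) (s_SF psi)) (s_theta psi) (s_alpha psi)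
              (reduct t (s_SP psi) (s_SF psi) M) (s_models psi i).

Definition L1_equiv (t : vocab) (K : Type) (M N : structure t) : Prop :=
  forall psi : L1sent t K, L1sat t K M psi <-> L1sat t K N psi.

(* ISO plays the two component games in parallel. In a product a pair is answered by the
   pair of the component answers and receives a height dominating those of its components;
   a sum game is just a pair of component games. Hence E^0 is preserved, and so is E^1, since
   E^0 is reflexive (ISO copies every move). Parallel play needs a union of two sets of size
   theta to have size theta, i.e. theta infinite; this absorption is proved with Zorn's
   lemma. For finite theta the ordinal alpha is finite, ISO wins by never matching anything,
   and E^1 is just agreement on quantifier-free sentences, which products and sums preserve.
   Finally every structure is the only model, up to E^1, of an L^1 sentence listing just it,
   so L^1-equivalence is E^1-equivalence of all small reducts. *)

From Stdlib Require Import Classical ClassicalEpsilon Relations List Lia PeanoNat.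
From Stdlib Require Import FunctionalExtensionality PropExtensionality.

Definition sig_of_ex {A : Type} {P : A -> Prop} (H : exists x, P x) : {x | P x} :=
  constructive_indefinite_description P H.

Lemma card_le_trans (A B C : Type) : card_le A B -> card_le B C -> card_le A C.
Proof. intros [f Hf] [g Hg]. exists (fun x => g (f x)). auto. Qed.

Lemma card_le_sig_False (A B : Type) : card_le {x : A | False} B.
Proof. exists (fun z => False_rect B (proj2_sig z)). intros [x []]. Qed.

Lemma card_le_sig_or {A : Type} (P Q : A -> Prop) :
  card_le {x | P x \/ Q x} ({x | P x} + {x | Q x}).
Proof.
  exists (fun z => match excluded_middle_informative (P (proj1_sig z)) with
           | left H => inl (exist _ _ H)
           | right H => inr (exist Q (proj1_sig z)
               (match proj2_sig z with or_introl h => False_ind _ (H h) | or_intror h => h end))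
           end).
  intros [x Hx] [y Hy]. simpl.
  destruct (excluded_middle_informative (P x)), (excluded_middle_informative (P y)); intro H;
    inversion H; subst; f_equal; apply proof_irrelevance.
Qed.

(* Otherwise adding a new element to a list forever yields a copy of [nat]. *)
Lemma listable_of_not_card_le_nat (T : Type) :
  ~ card_le nat T -> exists l : list T, forall x, In x l.
Proof.
  intro Hn. apply NNPP. intro Hl.
  assert (Hnew : forall l : list T, exists x, ~ In x l).
  { intro l. apply not_all_ex_not. intro H. apply Hl. exists l. exact H. }
  set (next := fun l => proj1_sig (sig_of_ex (Hnew l))).
  set (f := fix f (n : nat) : list T := match n with 0 => nil | S n => next (f n) :: f n end).
  assert (Hin : forall m n, m < n -> In (next (f m)) (f n)).
  { intros m n; induction n as [|n IH]; intro Hmn; [lia|].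
    simpl. destruct (Nat.eq_dec m n) as [->|Hne]; [left; reflexivity|].
    right. apply IH. lia. }
  apply Hn. exists (fun n => next (f n)). intros x y Hxy.
  destruct (Nat.lt_trichotomy x y) as [H|[H|H]]; auto; exfalso.
  - apply (proj2_sig (sig_of_ex (Hnew (f y)))). fold (next (f y)). rewrite <- Hxy. auto.
  - apply (proj2_sig (sig_of_ex (Hnew (f x)))). fold (next (f x)). rewrite Hxy. auto.
Qed.

Section BourbakiWitt.
Variables (P : Type) (le : P -> P -> Prop).
Hypothesis le_refl : forall x, le x x.
Hypothesis le_trans : forall x y z, le x y -> le y z -> le x z.
Hypothesis le_antisym : forall x y, le x y -> le y x -> x = y.
Variable sup : (P -> Prop) -> P.

Definition chain (C : P -> Prop) := forall x y, C x -> C y -> le x y \/ le y x.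

Hypothesis sup_ub : forall C, chain C -> forall x, C x -> le x (sup C).
Hypothesis sup_lub : forall C, chain C -> forall u, (forall x, C x -> le x u) -> le (sup C) u.
Variable f : P -> P.
Hypothesis f_infl : forall x, le x (f x).

Definition tower_closed (S : P -> Prop) :=
  (forall x, S x -> S (f x)) /\ (forall C, chain C -> (forall x, C x -> S x) -> S (sup C)).
Definition tower (x : P) := forall S, tower_closed S -> S x.

Lemma tower_closed_tower : tower_closed tower.
Proof.
  split.
  - intros x Hx S HS. apply (proj1 HS). apply Hx; auto.
  - intros C HC HCt S HS. apply (proj2 HS); auto. intros x Hx. apply HCt; auto.
Qed.

Definition extreme c := forall x, tower x -> le x c -> x <> c -> le (f x) c.

Lemma tower_split c : tower c -> extreme c -> forall x, tower x -> le x c \/ le (f c) x.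
Proof.
  intros Hc He x Hx.
  enough (H : tower x /\ (le x c \/ le (f c) x)) by exact (proj2 H).
  apply Hx. split.
  - intros y [Hy Hyc]. split; [apply (proj1 tower_closed_tower _ Hy)|]. destruct Hyc as [Hyc|Hyc].
    + destruct (classic (y = c)) as [->|Hne]; [right; apply le_refl|left; apply He; auto].
    + right. eapply le_trans; eauto.
  - intros C HC HCS. split; [apply (proj2 tower_closed_tower); auto; apply HCS|].
    destruct (classic (exists y, C y /\ le (f c) y)) as [[y [Hy Hcy]]|Hno].
    + right. eapply le_trans; eauto.
    + left. apply sup_lub; auto.
      intros y Hy. destruct (proj2 (HCS y Hy)) as [H|H]; auto. exfalso; eauto.
Qed.

Lemma tower_extreme c : tower c -> extreme c.
Proof.
  intro Hc.
  enough (H : tower c /\ extreme c) by exact (proj2 H).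
  apply Hc. split.
  - intros c0 [Hc0 He0]. split; [apply (proj1 tower_closed_tower); auto|].
    intros x Hx Hle Hne.
    destruct (tower_split c0 Hc0 He0 x Hx) as [H|H].
    + destruct (classic (x = c0)) as [->|Hne0]; [apply le_refl|].
      eapply le_trans; [apply He0; auto|apply f_infl].
    + exfalso. apply Hne. apply le_antisym; auto.
  - intros C HC HCS. split; [apply (proj2 tower_closed_tower); auto; apply HCS|].
    intros x Hx Hle Hne.
    destruct (classic (exists c', C c' /\ ~ le c' x)) as [[c' [Hc' Hnle]]|Hno].
    + destruct (HCS c' Hc') as [Htc' Hec'].
      destruct (tower_split c' Htc' Hec' x Hx) as [H|H].
      * destruct (classic (x = c')) as [->|Hne']; [exfalso; apply Hnle, le_refl|].
        eapply le_trans; [apply Hec'; auto|apply sup_ub; auto].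
      * exfalso. apply Hnle. eapply le_trans; [apply f_infl|exact H].
    + exfalso. apply Hne. apply le_antisym; auto. apply sup_lub; auto.
      intros y Hy. apply NNPP. intro H; apply Hno; eauto.
Qed.

Lemma bourbaki_witt (S : P -> Prop) : tower_closed S -> exists s, S s /\ le (f s) s.
Proof.
  intro HS.
  assert (Hch : chain tower).
  { intros x y Hx Hy. destruct (tower_split y Hy (tower_extreme y Hy) x Hx) as [H|H]; auto.
    right. eapply le_trans; [apply f_infl|exact H]. }
  assert (Htop : tower (sup tower)) by (apply (proj2 tower_closed_tower); auto).
  exists (sup tower). split; [apply Htop, HS|].
  apply sup_ub; auto. apply (proj1 tower_closed_tower), Htop.
Qed.

End BourbakiWitt.

Section Zorn.
Variables (A B : Type).

Definition rel_le (R R' : A -> B -> Prop) := forall x y, R x y -> R' x y.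
Definition rel_union (D : (A -> B -> Prop) -> Prop) (x : A) (y : B) := exists R, D R /\ R x y.

Lemma rel_le_antisym (R R' : A -> B -> Prop) : rel_le R R' -> rel_le R' R -> R = R'.
Proof.
  intros H1 H2. apply functional_extensionality; intro x.
  apply functional_extensionality; intro y. apply propositional_extensionality; split; auto.
Qed.

Lemma chain_common (D : (A -> B -> Prop) -> Prop) x y x' y' :
  chain _ rel_le D -> rel_union D x y -> rel_union D x' y' ->
  exists R, D R /\ R x y /\ R x' y'.
Proof.
  intros HD [R [HR Hr]] [R' [HR' Hr']].
  destruct (HD R R' HR HR') as [H|H]; [exists R'|exists R]; auto.
Qed.

Lemma zorn_relations (Good : (A -> B -> Prop) -> Prop) :
  Good (fun _ _ => False) ->
  (forall D, chain _ rel_le D -> (forall R, D R -> Good R) -> Good (rel_union D)) ->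
  exists s, Good s /\ forall R, Good R -> rel_le s R -> rel_le R s.
Proof.
  intros Hbot Hchain.
  set (ext := fun R =>
    match excluded_middle_informative (exists R', Good R' /\ rel_le R R' /\ ~ rel_le R' R) with
    | left H => proj1_sig (sig_of_ex H)
    | right _ => R
    end).
  assert (Hext : forall R, rel_le R (ext R)).
  { intro R. unfold ext. destruct excluded_middle_informative as [H|H]; [|intros ? ? h; exact h].
    exact (proj1 (proj2 (proj2_sig (sig_of_ex H)))). }
  destruct (bourbaki_witt _ rel_le (fun R x y h => h) (fun R R' R'' h h' x y r => h' _ _ (h _ _ r))
              rel_le_antisym rel_union) with (f := ext) (S := Good)
    as [s [Hs Hfs]].
  - intros C HC R HR x y H. exists R. auto.
  - intros C HC u Hub x y [R [HR H]]. apply (Hub R); auto.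
  - exact Hext.
  - split; [|exact Hchain].
    intros R HR. unfold ext. destruct excluded_middle_informative as [H|H]; auto.
    exact (proj1 (proj2_sig (sig_of_ex H))).
  - exists s. split; [exact Hs|]. intros R HR Hle. apply NNPP. intro Hn.
    unfold ext in Hfs. destruct excluded_middle_informative as [H|H].
    + apply (proj2 (proj2 (proj2_sig (sig_of_ex H)))). exact Hfs.
    + apply H. exists R. auto.
Qed.

End Zorn.

Section Absorption.
Variable T : Type.

Definition pairing := bool * T -> T -> Prop.
Definition rng (R : pairing) (x : T) := exists p, R p x.

(* [R] is a bijection from [bool * rng R] onto [rng R]. *)
Definition doubling (R : pairing) :=
  partial_inj R /\ (forall i x y, R (i, x) y -> rng R x) /\
  (forall i x, rng R x -> exists y, R (i, x) y).

Definition nat_pairing (e : nat -> T) : pairing :=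
  fun p y => exists k, snd p = e k /\ y = e (2 * k + Nat.b2n (fst p)).

Lemma double_b2n_inj i i' k k' : 2 * k + Nat.b2n i = 2 * k' + Nat.b2n i' -> i = i' /\ k = k'.
Proof. destruct i, i'; simpl; intro H; try (exfalso; lia); split; auto; lia. Qed.

Lemma rng_nat_pairing e x : rng (nat_pairing e) x -> exists k, x = e k.
Proof. intros [p [k [_ ->]]]. eauto. Qed.

Lemma nat_pairing_doubling (e : nat -> T) :
  (forall m n, e m = e n -> m = n) -> doubling (nat_pairing e).
Proof.
  intro He. split; [split|split].
  - intros [i x] y y' [k [H1 ->]] [k' [H1' ->]]; simpl in *. subst.
    apply He in H1'. subst. reflexivity.
  - intros [i x] [i' x'] y [k [H1 ->]] [k' [H1' H2']]; simpl in *. subst.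
    apply He, double_b2n_inj in H2' as [-> ->]. reflexivity.
  - intros i x y [k [H1 _]]; simpl in *. subst.
    destruct (Nat.Even_or_Odd k) as [[m Hm]|[m Hm]];
      [exists (false, e m)|exists (true, e m)]; exists m; simpl; split; auto; f_equal; lia.
  - intros i x [z [k [_ ->]]]. eexists. exists (2 * k + Nat.b2n (fst z)). split; reflexivity.
Qed.

Lemma doubling_rel_union (D : pairing -> Prop) :
  chain _ (rel_le _ _) D -> (forall R, D R -> doubling R) -> doubling (rel_union _ _ D).
Proof.
  intros HD HG. split; [split|split].
  - intros p y y' H1 H2. destruct (chain_common _ _ D _ _ _ _ HD H1 H2) as [R [HR [Hy Hy']]].
    exact (proj1 (proj1 (HG R HR)) p y y' Hy Hy').
  - intros p p' y H1 H2. destruct (chain_common _ _ D _ _ _ _ HD H1 H2) as [R [HR [Hy Hy']]].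
    exact (proj2 (proj1 (HG R HR)) p p' y Hy Hy').
  - intros i x y [R [HR H]]. destruct (proj1 (proj2 (HG R HR)) i x y H) as [z Hz].
    exists z, R. auto.
  - intros i x [z [R [HR H]]]. destruct (proj2 (proj2 (HG R HR)) i x (ex_intro _ z H)) as [y Hy].
    exists y, R. auto.
Qed.

Lemma doubling_disjoint_union (R1 R2 : pairing) :
  doubling R1 -> doubling R2 -> (forall x, rng R1 x -> rng R2 x -> False) ->
  doubling (fun p y => R1 p y \/ R2 p y).
Proof.
  intros [[F1 I1] [D1 T1]] [[F2 I2] [D2 T2]] Hdis. split; [split|split].
  - intros [i x] y y' [H|H] [H'|H']; eauto; exfalso; eapply Hdis; eauto.
  - intros p p' y [H|H] [H'|H']; eauto; exfalso; apply (Hdis y); eexists; eauto.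
  - intros i x y [H|H]; [destruct (D1 i x y H) as [z Hz]|destruct (D2 i x y H) as [z Hz]];
      exists z; auto.
  - intros i x [z [H|H]]; [destruct (T1 i x) as [y Hy]|destruct (T2 i x) as [y Hy]];
      try (exists z; exact H); exists y; auto.
Qed.

Lemma maximal_doubling :
  exists s, doubling s /\ forall R, doubling R -> rel_le _ _ s R -> rel_le _ _ R s.
Proof.
  apply zorn_relations; [|intros D HD HG; apply doubling_rel_union; auto].
  split; [split|split]; intros; try contradiction. destruct H as [_ []].
Qed.

(* A copy of [nat] outside the range of [s] could be paired up and added to [s]. *)
Lemma maximal_doubling_cofinite (s : pairing) :
  doubling s -> (forall R, doubling R -> rel_le _ _ s R -> rel_le _ _ R s) ->
  ~ card_le nat {x | ~ rng s x}.
Proof.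
  intros Hs Hmax [e' He'].
  set (e2 := fun k => proj1_sig (e' k)).
  assert (He2 : forall m n, e2 m = e2 n -> m = n).
  { intros m n H. apply He'. apply eq_sig_hprop; auto. intros; apply proof_irrelevance. }
  assert (Hout : forall k, ~ rng s (e2 k)) by (intro k; exact (proj2_sig (e' k))).
  assert (Hd : doubling (fun p y => s p y \/ nat_pairing e2 p y)).
  { apply doubling_disjoint_union; auto using nat_pairing_doubling.
    intros x Hx Hx2. destruct (rng_nat_pairing _ _ Hx2) as [k ->]. exact (Hout k Hx). }
  apply (Hout 0). exists (false, e2 0).
  apply (Hmax _ Hd (fun p y h => or_introl h)). right. exists 0. auto.
Qed.

Variable e : nat -> T.
Hypothesis e_inj : forall m n, e m = e n -> m = n.

Lemma shift_avoiding (m : nat) :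
  exists sh : T -> T, (forall y y', sh y = sh y' -> y = y') /\ forall y n, n < m -> sh y <> e n.
Proof.
  set (sh := fun y => match excluded_middle_informative (exists k, y = e k) with
                      | left H => e (proj1_sig (sig_of_ex H) + m) | right _ => y end).
  exists sh. split.
  - intros y y'. unfold sh.
    destruct (excluded_middle_informative (exists k, y = e k)) as [H1|H1];
    destruct (excluded_middle_informative (exists k, y' = e k)) as [H2|H2]; intro H.
    + destruct (sig_of_ex H1) as [k Hk], (sig_of_ex H2) as [k' Hk']; simpl in H.
      apply e_inj in H. subst. f_equal. lia.
    + exfalso. apply H2. eauto.
    + exfalso. apply H1. eauto.
    + exact H.
  - intros y n Hn. unfold sh. destruct excluded_middle_informative as [H1|H1]; intro H.
    + apply e_inj in H. lia.
    + apply H1. eauto.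
Qed.

(* [rng s] absorbs [bool * rng s] through [s] shifted away from [e 0, ..., e (m-1)],
   and those [m] points absorb [bool] times the finite complement of [rng s]. *)
Lemma card_le_bool_prod : card_le (bool * T) T.
Proof.
  destruct maximal_doubling as [s [Hs Hmax]].
  destruct (listable_of_not_card_le_nat _ (maximal_doubling_cofinite s Hs Hmax)) as [l Hl].
  destruct Hs as [[Fs Is] [_ Ts]].
  set (l' := map (@proj1_sig _ _) l).
  assert (Hidx : forall x, ~ rng s x -> exists n, nth_error l' n = Some x).
  { intros x Hx. apply In_nth_error, in_map_iff. exists (exist _ x Hx). auto. }
  assert (Hlen : forall x n, nth_error l' n = Some x -> forall i, 2 * n + Nat.b2n i < 2 * length l').
  { intros x n Hn i. assert (n < length l') by (apply nth_error_Some; congruence).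
    destruct i; simpl; lia. }
  destruct (shift_avoiding (2 * length l')) as [sh [Hsh Hav]].
  exists (fun p : bool * T =>
    match excluded_middle_informative (rng s (snd p)) with
    | left H => sh (proj1_sig (sig_of_ex (Ts (fst p) (snd p) H)))
    | right H => e (2 * proj1_sig (sig_of_ex (Hidx _ H)) + Nat.b2n (fst p))
    end).
  intros [i x] [i' x']; simpl.
  destruct (excluded_middle_informative (rng s x)) as [H1|H1];
  destruct (excluded_middle_informative (rng s x')) as [H2|H2]; intro H.
  - apply Hsh in H. destruct (sig_of_ex (Ts i x H1)) as [y Hy], (sig_of_ex (Ts i' x' H2)) as [y' Hy'].
    simpl in H. subst. eapply Is; eauto.
  - destruct (sig_of_ex (Hidx x' H2)) as [n Hn]. exfalso. eapply Hav; [eapply Hlen, Hn|exact H].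
  - destruct (sig_of_ex (Hidx x H1)) as [n Hn]. exfalso. eapply Hav; [eapply Hlen, Hn|symmetry; exact H].
  - destruct (sig_of_ex (Hidx x H1)) as [n Hn], (sig_of_ex (Hidx x' H2)) as [n' Hn']. simpl in H.
    apply e_inj, double_b2n_inj in H as [-> ->]. congruence.
Qed.

End Absorption.

Lemma card_le_sum_absorb (T X Y : Type) :
  card_le nat T -> card_le X T -> card_le Y T -> card_le (X + Y) T.
Proof.
  intros [e He] [f Hf] [g Hg]. apply (card_le_trans _ (bool * T)); [|exact (card_le_bool_prod T e He)].
  exists (fun z => match z with inl x => (true, f x) | inr y => (false, g y) end).
  intros [x|y] [x'|y'] H; inversion H; f_equal; auto.
Qed.

Lemma card_le_sig_or_absorb (theta A : Type) (P Q : A -> Prop) :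
  card_le nat theta -> card_le {x | P x} theta -> card_le {x | Q x} theta ->
  card_le {x | P x \/ Q x} theta.
Proof.
  intros Hn H1 H2. eapply card_le_trans; [apply card_le_sig_or|]. apply card_le_sum_absorb; auto.
Qed.

Lemma card_le_proj1 {A B : Type} (P : A * B -> Prop) : card_le {a | exists b, P (a, b)} {x | P x}.
Proof.
  exists (fun z => exist P (proj1_sig z, proj1_sig (sig_of_ex (proj2_sig z))) (proj2_sig (sig_of_ex (proj2_sig z)))).
  intros [a Ha] [a' Ha'] H. simpl in H. inversion H. subst. f_equal. apply proof_irrelevance.
Qed.

Lemma card_le_proj2 {A B : Type} (P : A * B -> Prop) : card_le {b | exists a, P (a, b)} {x | P x}.
Proof.
  exists (fun z => exist P (proj1_sig (sig_of_ex (proj2_sig z)), proj1_sig z) (proj2_sig (sig_of_ex (proj2_sig z)))).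
  intros [b Hb] [b' Hb'] H. simpl in H. inversion H. subst. f_equal. apply proof_irrelevance.
Qed.

Lemma card_le_range {A B : Type} (G : A -> B -> Prop) (D : A -> Prop) :
  partial_inj G -> (forall x y, G x y -> D x) -> card_le {y | exists x, G x y} {x | D x}.
Proof.
  intros [F I] HD.
  exists (fun z => exist D (proj1_sig (sig_of_ex (proj2_sig z))) (HD _ _ (proj2_sig (sig_of_ex (proj2_sig z))))).
  intros [y Hy] [y' Hy'] H. simpl in H. inversion H as [H1].
  destruct (sig_of_ex Hy) as [x Hx], (sig_of_ex Hy') as [x' Hx']. simpl in H1. subst.
  assert (y = y') by (eapply F; eauto). subst. f_equal. apply proof_irrelevance.
Qed.

Section Preservation.
Variable t : vocab.

Lemma preserves_qf_of_atomic (M N : structure t) (g : car M -> car N -> Prop) :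
  (forall k (psi : atomic t (Fin.t k)) a b, (forall i, g (a i) (b i)) ->
     (asat M a psi <-> asat N b psi)) ->
  preserves_qf t M N g.
Proof. intros H k [psi|psi] a b Hab; simpl; rewrite (H k psi a b Hab); tauto. Qed.

Lemma preserves_qf_atomic (M N : structure t) (g : car M -> car N -> Prop) k
  (psi : atomic t (Fin.t k)) a b :
  preserves_qf t M N g -> (forall i, g (a i) (b i)) -> (asat M a psi <-> asat N b psi).
Proof. intros P Hab. exact (P k (QAtom psi) a b Hab). Qed.

Lemma preserves_qf_flip (M N : structure t) (g : car M -> car N -> Prop) :
  preserves_qf t M N g -> preserves_qf t N M (fun y x => g x y).
Proof. intros P k phi a b Hab. symmetry. apply P. exact Hab. Qed.

Lemma preserves_qf_mono (M N : structure t) (g g' : car M -> car N -> Prop) :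
  preserves_qf t M N g -> (forall x y, g' x y -> g x y) -> preserves_qf t M N g'.
Proof. intros P H k phi a b Hab. apply P. intro i. apply H, Hab. Qed.

Lemma preserves_qf_diag (M : structure t) (g : car M -> car M -> Prop) :
  (forall x y, g x y -> x = y) -> preserves_qf t M M g.
Proof.
  intros Hg k phi a b Hab.
  assert (a = b) by (apply functional_extensionality; intro i; apply Hg, Hab).
  subst. tauto.
Qed.

Lemma teval_prod (M1 M2 : structure t) V (a : V -> car (prod_struct t M1 M2)) (u : term t V) :
  teval (prod_struct t M1 M2) a u =
  (teval M1 (fun v => fst (a v)) u, teval M2 (fun v => snd (a v)) u).
Proof.
  induction u as [v|f args IH]; simpl; [destruct (a v); reflexivity|].
  f_equal; f_equal; apply functional_extensionality; intro i; rewrite IH; reflexivity.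
Qed.

Lemma asat_prod (M1 M2 : structure t) V (a : V -> car (prod_struct t M1 M2)) (psi : atomic t V) :
  asat (prod_struct t M1 M2) a psi <->
  asat M1 (fun v => fst (a v)) psi /\ asat M2 (fun v => snd (a v)) psi.
Proof.
  destruct psi as [p args|u1 u2]; simpl.
  - replace (fun i => fst (teval (prod_struct t M1 M2) a (args i)))
      with (fun i => teval M1 (fun v => fst (a v)) (args i))
      by (apply functional_extensionality; intro i; rewrite teval_prod; reflexivity).
    replace (fun i => snd (teval (prod_struct t M1 M2) a (args i)))
      with (fun i => teval M2 (fun v => snd (a v)) (args i))
      by (apply functional_extensionality; intro i; rewrite teval_prod; reflexivity).
    tauto.
  - rewrite !teval_prod. split; [intro H; inversion H; auto|intros [-> ->]; reflexivity].
Qed.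

Lemma preserves_qf_prod (M1 M2 N1 N2 : structure t) (g1 : car M1 -> car N1 -> Prop)
  (g2 : car M2 -> car N2 -> Prop) (g : car M1 * car M2 -> car N1 * car N2 -> Prop) :
  (forall x y, g x y -> g1 (fst x) (fst y) /\ g2 (snd x) (snd y)) ->
  preserves_qf t M1 N1 g1 -> preserves_qf t M2 N2 g2 ->
  preserves_qf t (prod_struct t M1 M2) (prod_struct t N1 N2) g.
Proof.
  intros Hg P1 P2. apply preserves_qf_of_atomic. intros k psi a b Hab.
  rewrite !asat_prod, (preserves_qf_atomic _ _ _ _ psi _ (fun v => fst (b v)) P1),
    (preserves_qf_atomic _ _ _ _ psi _ (fun v => snd (b v)) P2); [tauto| |];
    intro i; apply (Hg _ _ (Hab i)).
Qed.

Definition sum_rel {A1 A2 B1 B2 : Type} (g1 : A1 -> B1 -> Prop) (g2 : A2 -> B2 -> Prop)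
  (x : A1 + A2) (y : B1 + B2) : Prop :=
  match x, y with
  | inl a, inl b => g1 a b
  | inr p, inr q => g2 p q
  | _, _ => False
  end.

Variable H : fsym t -> False.

Lemma term_var V (u : term t V) : exists v, u = Var v.
Proof. destruct u as [v|f args]; [eauto|destruct (H f)]. Qed.

Lemma sum_pint_transfer (M1 M2 N1 N2 : structure t) (g1 : car M1 -> car N1 -> Prop)
  (g2 : car M2 -> car N2 -> Prop) (g : car M1 + car M2 -> car N1 + car N2 -> Prop) p a b :
  (forall x y, g x y -> sum_rel g1 g2 x y) ->
  preserves_qf t M1 N1 g1 -> preserves_qf t M2 N2 g2 -> (forall i, g (a i) (b i)) ->
  pint (sum_struct t H M1 M2) p a -> pint (sum_struct t H N1 N2) p b.
Proof.
  intros Hg P1 P2 Hab [[a1 [Ha Hp]]|[a2 [Ha Hp]]].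
  - assert (Hb : forall i, exists y, b i = inl y /\ g1 (a1 i) y).
    { intro i. generalize (Hg _ _ (Hab i)). rewrite Ha. destruct (b i); simpl; [eauto|tauto]. }
    left. exists (fun i => proj1_sig (sig_of_ex (Hb i))).
    split; [intro i; exact (proj1 (proj2_sig (sig_of_ex (Hb i))))|].
    apply (preserves_qf_atomic _ _ _ _ (APred p Var) a1 _ P1); [|exact Hp].
    intro i. exact (proj2 (proj2_sig (sig_of_ex (Hb i)))).
  - assert (Hb : forall i, exists y, b i = inr y /\ g2 (a2 i) y).
    { intro i. generalize (Hg _ _ (Hab i)). rewrite Ha. destruct (b i); simpl; [tauto|eauto]. }
    right. exists (fun i => proj1_sig (sig_of_ex (Hb i))).
    split; [intro i; exact (proj1 (proj2_sig (sig_of_ex (Hb i))))|].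
    apply (preserves_qf_atomic _ _ _ _ (APred p Var) a2 _ P2); [|exact Hp].
    intro i. exact (proj2 (proj2_sig (sig_of_ex (Hb i)))).
Qed.

Lemma preserves_qf_sum (M1 M2 N1 N2 : structure t) (g1 : car M1 -> car N1 -> Prop)
  (g2 : car M2 -> car N2 -> Prop) (g : car M1 + car M2 -> car N1 + car N2 -> Prop) :
  (forall x y, g x y -> sum_rel g1 g2 x y) -> partial_inj g ->
  preserves_qf t M1 N1 g1 -> preserves_qf t M2 N2 g2 ->
  preserves_qf t (sum_struct t H M1 M2) (sum_struct t H N1 N2) g.
Proof.
  intros Hg [F I] P1 P2. apply preserves_qf_of_atomic. intros k [p args|u1 u2] a b Hab.
  - assert (Hargs : args = fun i => Var (proj1_sig (sig_of_ex (term_var _ (args i))))).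
    { apply functional_extensionality. intro i. exact (proj2_sig (sig_of_ex (term_var _ (args i)))). }
    rewrite Hargs. simpl. split.
    + apply (sum_pint_transfer _ _ _ _ g1 g2 g); auto.
    + apply (sum_pint_transfer _ _ _ _ (fun y x => g1 x y) (fun y x => g2 x y) (fun y x => g x y));
        auto using preserves_qf_flip.
      intros [y|y] [x|x] h; exact (Hg _ _ h).
  - destruct (term_var _ u1) as [v1 ->], (term_var _ u2) as [v2 ->]. simpl.
    split; intro E; [apply (F (a v1))|apply (I _ _ (b v1))]; auto; rewrite E; auto.
Qed.

End Preservation.

Arguments sA1 {t alpha M1 M2} s _.
Arguments sA2 {t alpha M1 M2} s _.
Arguments sh1 {t alpha M1 M2} s _.
Arguments sh2 {t alpha M1 M2} s _.
Arguments sg {t alpha M1 M2} s _ _.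
Arguments sbeta {t alpha M1 M2} s.
Arguments sn {t alpha M1 M2} s.
Arguments swap {t alpha M1 M2} s.
Arguments is_state {t} theta {alpha M1 M2} s.
Arguments iso_response {t} theta {alpha M1 M2} s beta' A' s'.

Section Invariants.
Variables (t : vocab) (theta : Type) (alpha : WellOrder).

Definition iso_can_answer (M N : structure t) (Q : state t alpha M N -> Prop) : Prop :=
  forall s, Q s -> forall beta' (A' : car M -> Prop),
    olt alpha beta' (sbeta s) -> (forall x, sA1 s x -> A' x) -> card_le {x | A' x} theta ->
    exists s', iso_response theta s beta' A' s' /\ Q s'.

Definition swap_pred (M N : structure t) (Q : state t alpha M N -> Prop) : state t alpha N M -> Prop :=
  fun u => Q (swap u).

Lemma swap_swap (M N : structure t) (s : state t alpha M N) : swap (swap s) = s.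
Proof. destruct s; reflexivity. Qed.

Lemma iso_can_answer_ext (M N : structure t) (Q Q' : state t alpha M N -> Prop) :
  (forall s, Q s <-> Q' s) -> iso_can_answer M N Q -> iso_can_answer M N Q'.
Proof.
  intros Hiff H s Hs beta' A' H1 H2 H3. apply Hiff in Hs.
  destruct (H s Hs beta' A' H1 H2 H3) as [s' [Hr Hq]]. exists s'. split; [exact Hr|]. apply Hiff, Hq.
Qed.

(* Every move lowers the ordinal, so an invariant that ISO can maintain on both sides is
   a winning strategy. *)
Lemma iso_wins_of_invariant (M N : structure t) (Q : state t alpha M N -> Prop) :
  iso_can_answer M N Q -> iso_can_answer N M (swap_pred M N Q) ->
  forall s, Q s -> iso_wins t theta alpha M N s.
Proof.
  intros H1 H2.
  enough (Hb : forall b s, sbeta s = b -> Q s -> iso_wins t theta alpha M N s) by eauto.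
  intro b. induction (olt_wf alpha b) as [b _ IH]. intros s <- Hs.
  constructor.
  - intros beta' A' Hlt HA Hc. destruct (H1 s Hs beta' A' Hlt HA Hc) as [s' [Hr Hq]].
    exists s'. split; [exact Hr|]. apply (IH (sbeta s')); auto.
    destruct Hr as [_ [_ [-> _]]]. exact Hlt.
  - intros beta' A' Hlt HA Hc.
    assert (Hq : swap_pred M N Q (swap s)) by (unfold swap_pred; rewrite swap_swap; exact Hs).
    destruct (H2 _ Hq beta' A' Hlt HA Hc) as [u [Hr Hu]].
    exists (swap u). rewrite swap_swap. split; [exact Hr|].
    apply (IH (sbeta u)); auto.
    destruct Hr as [_ [_ [-> _]]]. exact Hlt.
Qed.

Lemma E0_of_invariant (M N : structure t) (Q : state t alpha M N -> Prop) :
  iso_can_answer M N Q -> iso_can_answer N M (swap_pred M N Q) ->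
  is_state theta (start_state t alpha M N) -> Q (start_state t alpha M N) -> E0 t theta alpha M N.
Proof. intros H1 H2 Hs Hq. split; [exact Hs|]. exact (iso_wins_of_invariant M N Q H1 H2 _ Hq). Qed.

Lemma is_state_swap (M N : structure t) (s : state t alpha M N) :
  is_state theta s -> is_state theta (swap s).
Proof.
  intros [C1 [C2 [[F I] [D1 [D2 [P [B1 B2]]]]]]]. unfold is_state; simpl.
  split; [exact C2|]. split; [exact C1|].
  split; [split; intros; eauto|]. split; [intros; eauto|]. split; [intros; eauto|].
  split; [exact (preserves_qf_flip t _ _ _ P)|split; intros; eauto].
Qed.

Lemma is_state_swap_iff (M N : structure t) (s : state t alpha N M) :
  is_state theta (swap s) <-> is_state theta s.
Proof.
  split; [|apply is_state_swap]. intro H. rewrite <- (swap_swap _ _ s). apply is_state_swap, H.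
Qed.

Definition winning (M N : structure t) (s : state t alpha M N) :=
  is_state theta s /\ iso_wins t theta alpha M N s.

Lemma winning_answer1 (M N : structure t) : iso_can_answer M N (winning M N).
Proof.
  intros s [_ [W1 _]] beta' A' H1 H2 H3.
  destruct (W1 beta' A' H1 H2 H3) as [s' [Hr Hw']]. exists s'.
  split; [exact Hr|split; [exact (proj1 Hr)|exact Hw']].
Qed.

Lemma winning_answer2 (M N : structure t) : iso_can_answer N M (swap_pred M N (winning M N)).
Proof.
  intros u [_ [_ W2]] beta' A' H1 H2 H3. rewrite swap_swap in W2.
  destruct (W2 beta' A' H1 H2 H3) as [s' [Hr Hw']]. exists (swap s').
  split; [exact Hr|]. split; [|rewrite swap_swap; exact Hw'].
  rewrite swap_swap. apply (is_state_swap_iff _ _ s'), (proj1 Hr).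
Qed.

End Invariants.

Definition qf_agree (t : vocab) (M N : structure t) := preserves_qf t M N (fun _ _ => False).

Lemma is_state_start_iff (t : vocab) (theta : Type) (alpha : WellOrder) (M N : structure t) :
  is_state theta (start_state t alpha M N) <-> qf_agree t M N.
Proof.
  split; [intros [_ [_ [_ [_ [_ [P _]]]]]]; exact P|].
  intro P. unfold is_state; simpl.
  split; [apply card_le_sig_False|]. split; [apply card_le_sig_False|].
  split; [split; intros; contradiction|].
  split; [intros; contradiction|]. split; [intros; contradiction|].
  split; [exact P|split; intros; contradiction].
Qed.

Section Combination.
Variables (t : vocab) (theta : Type) (alpha : WellOrder).
Variable op : structure t -> structure t -> structure t.
Variable link : forall M1 M2 N1 N2 : structure t,
  state t alpha (op M1 M2) (op N1 N2) -> state t alpha M1 N1 -> state t alpha M2 N2 -> Prop.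

Definition combined (M1 M2 N1 N2 : structure t)
  (Q1 : state t alpha M1 N1 -> Prop) (Q2 : state t alpha M2 N2 -> Prop)
  (S : state t alpha (op M1 M2) (op N1 N2)) : Prop :=
  is_state theta S /\ exists s1 s2, Q1 s1 /\ is_state theta s1 /\ Q2 s2 /\ is_state theta s2 /\
    link M1 M2 N1 N2 S s1 s2.

Hypothesis link_swap : forall M1 M2 N1 N2 S s1 s2,
  link M1 M2 N1 N2 S s1 s2 -> link N1 N2 M1 M2 (swap S) (swap s1) (swap s2).
Hypothesis link_start : forall M1 M2 N1 N2,
  link M1 M2 N1 N2 (start_state t alpha _ _) (start_state t alpha _ _) (start_state t alpha _ _).
Hypothesis qf_agree_op : forall M1 M2 N1 N2,
  qf_agree t M1 N1 -> qf_agree t M2 N2 -> qf_agree t (op M1 M2) (op N1 N2).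
Hypothesis answer_op : forall M1 M2 N1 N2 Q1 Q2,
  iso_can_answer t theta alpha M1 N1 Q1 -> iso_can_answer t theta alpha M2 N2 Q2 ->
  iso_can_answer t theta alpha (op M1 M2) (op N1 N2) (combined M1 M2 N1 N2 Q1 Q2).

Lemma swap_pred_combined M1 M2 N1 N2 Q1 Q2 S :
  swap_pred t alpha _ _ (combined M1 M2 N1 N2 Q1 Q2) S <->
  combined N1 N2 M1 M2 (swap_pred t alpha _ _ Q1) (swap_pred t alpha _ _ Q2) S.
Proof.
  unfold swap_pred, combined. rewrite is_state_swap_iff. split.
  - intros [HS [s1 [s2 [H1 [Hs1 [H2 [Hs2 Hl]]]]]]]. split; [exact HS|].
    exists (swap s1), (swap s2). rewrite !swap_swap, !is_state_swap_iff.
    split; [exact H1|split; [exact Hs1|split; [exact H2|split; [exact Hs2|]]]].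
    rewrite <- (swap_swap _ _ _ _ S). apply link_swap, Hl.
  - intros [HS [u1 [u2 [H1 [Hu1 [H2 [Hu2 Hl]]]]]]]. split; [exact HS|].
    exists (swap u1), (swap u2). rewrite !is_state_swap_iff.
    split; [exact H1|split; [exact Hu1|split; [exact H2|split; [exact Hu2|]]]].
    apply link_swap, Hl.
Qed.

Lemma E0_op (M1 M2 N1 N2 : structure t) :
  E0 t theta alpha M1 N1 -> E0 t theta alpha M2 N2 -> E0 t theta alpha (op M1 M2) (op N1 N2).
Proof.
  intros [Is1 W1] [Is2 W2].
  assert (Hstart : is_state theta (start_state t alpha (op M1 M2) (op N1 N2))).
  { apply (is_state_start_iff t theta alpha), qf_agree_op;
      [exact (proj1 (is_state_start_iff t theta alpha _ _) Is1)
      |exact (proj1 (is_state_start_iff t theta alpha _ _) Is2)]. }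
  apply (E0_of_invariant t theta alpha _ _
           (combined M1 M2 N1 N2 (winning t theta alpha M1 N1) (winning t theta alpha M2 N2))).
  - apply answer_op; apply winning_answer1.
  - apply (iso_can_answer_ext _ _ _ _ _ _ _ (fun S => iff_sym (swap_pred_combined _ _ _ _ _ _ S))).
    apply answer_op; apply winning_answer2.
  - exact Hstart.
  - split; [exact Hstart|].
    exists (start_state t alpha M1 N1), (start_state t alpha M2 N2).
    split; [split; [exact Is1|exact W1]|split; [exact Is1|]].
    split; [split; [exact Is2|exact W2]|split; [exact Is2|apply link_start]].
Qed.

End Combination.

Ltac destruct_state H c1 c2 f i d1 d2 p b1 b2 :=
  destruct H as [c1 [c2 [[f i] [d1 [d2 [p [b1 b2]]]]]]].
Ltac destruct_response H is hn hb ha1 ha2 hh1 hh2 hg ha1e ha2e hnew hdom :=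
  destruct H as [is [hn [hb [ha1 [ha2 [hh1 [hh2 [hg [ha1e [ha2e [hnew hdom]]]]]]]]]]].

Section Product.
Variables (t : vocab) (theta : Type) (alpha : WellOrder).
Hypothesis theta_inf : card_le nat theta.

Section ProductStep.
Variables (M1 M2 N1 N2 : structure t).

Local Notation PM := (prod_struct t M1 M2).
Local Notation PN := (prod_struct t N1 N2).

(* By the lower bounds on [h] a pair is due to be matched only when both of its components
   are; by the upper bound it is due as soon as both components have been matched. *)
Definition prod_link (St : state t alpha PM PN) (s1 : state t alpha M1 N1) (s2 : state t alpha M2 N2) :=
  sn St = sn s1 /\ sn St = sn s2 /\ sbeta St = sbeta s1 /\ sbeta St = sbeta s2 /\
  (forall x, sA1 St x -> sA1 s1 (fst x) /\ sA1 s2 (snd x) /\ sh1 s1 (fst x) <= sh1 St x /\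
     sh1 s2 (snd x) <= sh1 St x /\ sh1 St x <= Nat.max (sn St) (Nat.max (sh1 s1 (fst x)) (sh1 s2 (snd x)))) /\
  (forall y, sA2 St y -> sA2 s1 (fst y) /\ sA2 s2 (snd y) /\ sh2 s1 (fst y) <= sh2 St y /\
     sh2 s2 (snd y) <= sh2 St y /\ sh2 St y <= Nat.max (sn St) (Nat.max (sh2 s1 (fst y)) (sh2 s2 (snd y)))) /\
  (forall x y, sg St x y -> sg s1 (fst x) (fst y) /\ sg s2 (snd x) (snd y)).

Section ProductAnswer.
Variables (St : state t alpha PM PN) (s1 : state t alpha M1 N1) (s2 : state t alpha M2 N2).
Variables (beta' : option (wcar alpha)) (A' : car M1 * car M2 -> Prop).
Variables (s1' : state t alpha M1 N1) (s2' : state t alpha M2 N2).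
Hypothesis HSt : is_state theta St.
Hypothesis Hlink : prod_link St s1 s2.
Hypothesis HA' : forall x, sA1 St x -> A' x.
Hypothesis Hc' : card_le {x | A' x} theta.
Hypothesis Hr1 : iso_response theta s1 beta' (fun a => sA1 s1 a \/ exists p, A' (a, p)) s1'.
Hypothesis Hr2 : iso_response theta s2 beta' (fun p => sA1 s2 p \/ exists a, A' (a, p)) s2'.

Let n := sn St.

Definition prod_g (x : car PM) (y : car PN) : Prop :=
  sA1 St x /\ sh1 St x < S n /\ sg s1' (fst x) (fst y) /\ sg s2' (snd x) (snd y).

Definition prod_h1 (x : car PM) : nat :=
  match excluded_middle_informative (sA1 St x) with
  | left _ => sh1 St x
  | right _ => Nat.max (S n) (Nat.max (sh1 s1' (fst x)) (sh1 s2' (snd x)))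
  end.

Definition prod_h2 (y : car PN) : nat :=
  match excluded_middle_informative (sA2 St y) with
  | left _ => sh2 St y
  | right _ => Nat.max (sh2 s1' (fst y)) (sh2 s2' (snd y))
  end.

Definition prod_next : state t alpha PM PN :=
  Build_state t alpha PM PN A' (fun y => sA2 St y \/ exists x, prod_g x y)
    prod_h1 prod_h2 prod_g beta' (S n).

Lemma prod_h1_old x : sA1 St x -> prod_h1 x = sh1 St x.
Proof. intro H. unfold prod_h1. destruct excluded_middle_informative; [reflexivity|contradiction]. Qed.

Lemma prod_h2_old y : sA2 St y -> prod_h2 y = sh2 St y.
Proof. intro H. unfold prod_h2. destruct excluded_middle_informative; [reflexivity|contradiction]. Qed.

Lemma prod_sn1 : sn s1' = S n.
Proof. destruct Hr1 as [_ [-> _]]. unfold n. rewrite (proj1 Hlink). reflexivity. Qed.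

Lemma prod_sn2 : sn s2' = S n.
Proof. destruct Hr2 as [_ [-> _]]. unfold n. rewrite (proj1 (proj2 Hlink)). reflexivity. Qed.

Lemma prod_g_partial_inj : partial_inj prod_g.
Proof.
  destruct Hr1 as [[_ [_ [[F1 I1] _]]] _], Hr2 as [[_ [_ [[F2 I2] _]]] _].
  split.
  - intros [a p] [b q] [b' q'] [_ [_ [H1 H2]]] [_ [_ [H1' H2']]]. simpl in *. f_equal; eauto.
  - intros [a p] [a' p'] [b q] [_ [_ [H1 H2]]] [_ [_ [H1' H2']]]. simpl in *. f_equal; eauto.
Qed.

Lemma prod_g_old x y : sg St x y -> prod_g x y.
Proof.
  intro H. destruct_state HSt C1 C2 Fg Ig D1 D2 P B1 B2.
  destruct Hlink as [_ [_ [_ [_ [_ [_ Lg]]]]]]. destruct (Lg x y H) as [H1 H2].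
  destruct_response Hr1 Is1 Hn1 Hb1 HA11 HA21 Hh11 Hh21 Hg1 HA1e1 HA2e1 Hnew1 Hdom1.
  destruct_response Hr2 Is2 Hn2 Hb2 HA12 HA22 Hh12 Hh22 Hg2 HA1e2 HA2e2 Hnew2 Hdom2.
  split; [eapply D1; eauto|split; [apply Nat.lt_lt_succ_r, (B1 x y H)|auto]].
Qed.

Lemma prod_h2_lt x y : prod_g x y -> prod_h2 y < S n.
Proof.
  intros [_ [_ [H1 H2]]].
  pose proof prod_sn1 as E1. pose proof prod_sn2 as E2.
  destruct_response Hr1 Is1 Hn1 Hb1 HA11 HA21 Hh11 Hh21 Hg1 HA1e1 HA2e1 Hnew1 Hdom1.
  destruct_response Hr2 Is2 Hn2 Hb2 HA12 HA22 Hh12 Hh22 Hg2 HA1e2 HA2e2 Hnew2 Hdom2.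
  destruct_state Is1 C11 C21 F1 I1 D11 D21 P1 B11 B21.
  destruct_state Is2 C12 C22 F2 I2 D12 D22 P2 B12 B22.
  pose proof (B21 _ _ H1) as L1. pose proof (B22 _ _ H2) as L2.
  rewrite E1 in L1. rewrite E2 in L2. unfold prod_h2.
  destruct (excluded_middle_informative (sA2 St y)) as [Hy|Hy]; [|lia].
  destruct Hlink as [_ [_ [_ [_ [_ [LA2 _]]]]]].
  destruct (LA2 y Hy) as [Hy1 [Hy2 [_ [_ Hle]]]].
  rewrite Hh21 in L1 by exact Hy1. rewrite Hh22 in L2 by exact Hy2. fold n in Hle. lia.
Qed.

Lemma prod_next_is_state : is_state theta prod_next.
Proof.
  pose proof HSt as HStc. destruct_state HStc C1 C2 Fg Ig D1 D2 P B1 B2.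
  destruct_response Hr1 Is1 Hn1 Hb1 HA11 HA21 Hh11 Hh21 Hg1 HA1e1 HA2e1 Hnew1 Hdom1.
  destruct_response Hr2 Is2 Hn2 Hb2 HA12 HA22 Hh12 Hh22 Hg2 HA1e2 HA2e2 Hnew2 Hdom2.
  destruct_state Is1 C11 C21 F1 I1 D11 D21 P1 B11 B21.
  destruct_state Is2 C12 C22 F2 I2 D12 D22 P2 B12 B22.
  split; [exact Hc'|]. split.
  - apply card_le_sig_or_absorb; auto.
    eapply card_le_trans; [apply (card_le_range prod_g (sA1 St))|]; auto.
    + exact prod_g_partial_inj.
    + intros x y Hg; exact (proj1 Hg).
  - split; [exact prod_g_partial_inj|].
    split; [intros x y Hg; apply HA'; exact (proj1 Hg)|].
    split; [intros x y Hg; right; eauto|]. split.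
    + apply (preserves_qf_prod t M1 M2 N1 N2 (sg s1') (sg s2')).
      * intros x y [_ [_ [H1 H2]]]; auto.
      * exact P1.
      * exact P2.
    + split; [|exact prod_h2_lt].
      intros x y [Hx [Hh _]]. simpl. rewrite prod_h1_old; assumption.
Qed.

Lemma prod_g_dom x : (exists y, prod_g x y) <-> sA1 St x /\ sh1 St x < S n.
Proof.
  split; [intros [y [Hx [Hh _]]]; auto|intros [Hx Hh]].
  destruct Hlink as [Ln1 [Ln2 [_ [_ [LA1 _]]]]]. destruct (LA1 x Hx) as [Hx1 [Hx2 [L1 [L2 _]]]].
  destruct_response Hr1 Is1 Hn1 Hb1 HA11 HA21 Hh11 Hh21 Hg1 HA1e1 HA2e1 Hnew1 Hdom1.
  destruct_response Hr2 Is2 Hn2 Hb2 HA12 HA22 Hh12 Hh22 Hg2 HA1e2 HA2e2 Hnew2 Hdom2.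
  destruct (proj2 (Hdom1 (fst x))) as [y1 Hy1]; [split; [exact Hx1|]; rewrite <- Ln1; fold n; lia|].
  destruct (proj2 (Hdom2 (snd x))) as [y2 Hy2]; [split; [exact Hx2|]; rewrite <- Ln2; fold n; lia|].
  exists (y1, y2). repeat split; auto.
Qed.

Lemma prod_next_response : iso_response theta St beta' A' prod_next.
Proof.
  split; [exact prod_next_is_state|]. do 2 (split; [reflexivity|]).
  split; [exact HA'|]. split; [intros y Hy; left; exact Hy|].
  split; [exact prod_h1_old|]. split; [exact prod_h2_old|]. split; [exact prod_g_old|].
  do 2 (split; [intro; apply iff_refl|]).
  split; [|exact prod_g_dom].
  intros x _ Hx. simpl. unfold prod_h1.
  destruct excluded_middle_informative; [contradiction|lia].
Qed.

Lemma max_le_succ a b c : a <= Nat.max b c -> a <= Nat.max (S b) c.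
Proof. lia. Qed.

Lemma prod_next_link : prod_link prod_next s1' s2'.
Proof.
  pose proof prod_sn1 as E1. pose proof prod_sn2 as E2.
  destruct Hlink as [Ln1 [Ln2 [Lb1 [Lb2 [LA1 [LA2 _]]]]]].
  destruct_response Hr1 Is1 Hn1 Hb1 HA11 HA21 Hh11 Hh21 Hg1 HA1e1 HA2e1 Hnew1 Hdom1.
  destruct_response Hr2 Is2 Hn2 Hb2 HA12 HA22 Hh12 Hh22 Hg2 HA1e2 HA2e2 Hnew2 Hdom2.
  destruct_state Is1 C11 C21 F1 I1 D11 D21 P1 B11 B21.
  destruct_state Is2 C12 C22 F2 I2 D12 D22 P2 B12 B22.
  split; [simpl; congruence|]. split; [simpl; congruence|].
  split; [simpl; congruence|]. split; [simpl; congruence|].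
  split; [|split; [|intros x y [_ [_ [H1 H2]]]; auto]].
  - intros [a p] Hx. cbn [prod_next sA1 sh1 sn] in Hx |- *.
    assert (Ha : sA1 s1' a) by (apply HA1e1; right; exists p; exact Hx).
    assert (Hp : sA1 s2' p) by (apply HA1e2; right; exists a; exact Hx).
    split; [exact Ha|split; [exact Hp|]]. unfold prod_h1.
    destruct (excluded_middle_informative (sA1 St (a, p))) as [Hin|Hin]; [|cbn [fst snd]; lia].
    destruct (LA1 _ Hin) as [Ha1 [Hp1 [L1 [L2 L3]]]]. cbn [fst snd] in *.
    rewrite (Hh11 a Ha1), (Hh12 p Hp1). fold n in L3. split; [|split]; [auto|auto|].
    apply max_le_succ, L3.
  - intros [b q] Hy. cbn [prod_next sA2 sh2 sn] in Hy |- *. unfold prod_h2.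
    destruct (excluded_middle_informative (sA2 St (b, q))) as [Hin|Hin].
    + destruct (LA2 _ Hin) as [Hb1' [Hq1 [L1 [L2 L3]]]]. cbn [fst snd] in *.
      rewrite (Hh21 b Hb1'), (Hh22 q Hq1). fold n in L3.
      split; [apply HA21, Hb1'|split; [apply HA22, Hq1|split; [|split]]]; [auto|auto|].
      apply max_le_succ, L3.
    + destruct Hy as [Hy|[x [_ [_ [H1 H2]]]]]; [contradiction|]. cbn [fst snd] in *.
      split; [eapply D21; eauto|split; [eapply D22; eauto|lia]].
Qed.

End ProductAnswer.

End ProductStep.

Lemma prod_answer (M1 M2 N1 N2 : structure t)
  (Q1 : state t alpha M1 N1 -> Prop) (Q2 : state t alpha M2 N2 -> Prop) :
  iso_can_answer t theta alpha M1 N1 Q1 -> iso_can_answer t theta alpha M2 N2 Q2 ->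
  iso_can_answer t theta alpha (prod_struct t M1 M2) (prod_struct t N1 N2)
    (combined t theta alpha (prod_struct t) prod_link M1 M2 N1 N2 Q1 Q2).
Proof.
  intros HQ1 HQ2 St [HSt [s1 [s2 [Hq1 [Hs1 [Hq2 [Hs2 Hl]]]]]]] beta' A' Hlt HA Hc.
  pose proof Hl as [_ [_ [Lb1 [Lb2 _]]]].
  destruct (HQ1 s1 Hq1 beta' (fun a => sA1 s1 a \/ exists p, A' (a, p))) as [s1' [Hr1 Hq1']].
  { rewrite <- Lb1. exact Hlt. }
  { intros x Hx. left. exact Hx. }
  { apply card_le_sig_or_absorb; [exact theta_inf|exact (proj1 Hs1)|].
    eapply card_le_trans; [apply card_le_proj1|exact Hc]. }
  destruct (HQ2 s2 Hq2 beta' (fun p => sA1 s2 p \/ exists a, A' (a, p))) as [s2' [Hr2 Hq2']].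
  { rewrite <- Lb2. exact Hlt. }
  { intros x Hx. left. exact Hx. }
  { apply card_le_sig_or_absorb; [exact theta_inf|exact (proj1 Hs2)|].
    eapply card_le_trans; [apply card_le_proj2|exact Hc]. }
  exists (prod_next M1 M2 N1 N2 St beta' A' s1' s2').
  split; [eapply prod_next_response; eassumption|].
  split; [eapply prod_next_is_state; eassumption|].
  exists s1', s2'. split; [exact Hq1'|split; [exact (proj1 Hr1)|]].
  split; [exact Hq2'|split; [exact (proj1 Hr2)|]].
  eapply prod_next_link; eassumption.
Qed.

Lemma prod_link_swap (M1 M2 N1 N2 : structure t) St s1 s2 :
  prod_link M1 M2 N1 N2 St s1 s2 -> prod_link N1 N2 M1 M2 (swap St) (swap s1) (swap s2).
Proof.
  intros [a [b [c [d [e [f g]]]]]]. unfold prod_link; simpl.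
  do 4 (split; [assumption|]). split; [exact f|split; [exact e|]].
  intros x y H. apply g in H. tauto.
Qed.

Lemma qf_agree_prod (M1 M2 N1 N2 : structure t) :
  qf_agree t M1 N1 -> qf_agree t M2 N2 -> qf_agree t (prod_struct t M1 M2) (prod_struct t N1 N2).
Proof.
  intros H1 H2. apply (preserves_qf_prod t M1 M2 N1 N2 (fun _ _ => False) (fun _ _ => False)); auto.
Qed.

Lemma prod_link_start (M1 M2 N1 N2 : structure t) :
  prod_link M1 M2 N1 N2 (start_state t alpha _ _) (start_state t alpha _ _) (start_state t alpha _ _).
Proof. unfold prod_link; simpl. repeat split; intros; contradiction. Qed.

Lemma E0_prod (M1 M2 N1 N2 : structure t) :
  E0 t theta alpha M1 N1 -> E0 t theta alpha M2 N2 ->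
  E0 t theta alpha (prod_struct t M1 M2) (prod_struct t N1 N2).
Proof.
  exact (E0_op t theta alpha (prod_struct t) prod_link prod_link_swap prod_link_start qf_agree_prod
           prod_answer M1 M2 N1 N2).
Qed.

End Product.

Definition sum_elim {A B C : Type} (f : A -> C) (g : B -> C) (z : A + B) : C :=
  match z with inl a => f a | inr b => g b end.

Lemma card_le_sum_elim (theta A B : Type) (P : A -> Prop) (Q : B -> Prop) :
  card_le nat theta -> card_le {x | P x} theta -> card_le {x | Q x} theta ->
  card_le {z | sum_elim P Q z} theta.
Proof.
  intros Hn H1 H2. eapply card_le_trans; [|exact (card_le_sum_absorb _ _ _ Hn H1 H2)].
  exists (fun z => match z with
                   | exist _ (inl a) h => inl (exist P a h)
                   | exist _ (inr b) h => inr (exist Q b h) end).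
  intros [[a|b] h] [[a'|b'] h'] E; inversion E; subst; f_equal; apply proof_irrelevance.
Qed.

Lemma sum_rel_partial_inj {A1 A2 B1 B2 : Type} (g1 : A1 -> B1 -> Prop) (g2 : A2 -> B2 -> Prop) :
  partial_inj g1 -> partial_inj g2 -> partial_inj (sum_rel g1 g2).
Proof.
  intros [F1 I1] [F2 I2]. split.
  - intros [a|a] [b|b] [b'|b'] h h'; simpl in *; try contradiction; f_equal; eauto.
  - intros [a|a] [a'|a'] [b|b] h h'; simpl in *; try contradiction; f_equal; eauto.
Qed.

Lemma sum_rel_dom {A1 A2 B1 B2 : Type} (g1 : A1 -> B1 -> Prop) (g2 : A2 -> B2 -> Prop) x :
  (exists y, sum_rel g1 g2 x y) <->
  sum_elim (fun a => exists b, g1 a b) (fun a => exists b, g2 a b) x.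
Proof.
  destruct x as [a|a]; simpl; split.
  1,3: intros [[b|b] h]; simpl in h; try contradiction; eauto.
  - intros [b h]. exists (inl b). exact h.
  - intros [b h]. exists (inr b). exact h.
Qed.

Lemma sum_rel_rng {A1 A2 B1 B2 : Type} (g1 : A1 -> B1 -> Prop) (g2 : A2 -> B2 -> Prop) y :
  (exists x, sum_rel g1 g2 x y) <->
  sum_elim (fun b => exists a, g1 a b) (fun b => exists a, g2 a b) y.
Proof.
  destruct y as [b|b]; simpl; split.
  1,3: intros [[a|a] h]; simpl in h; try contradiction; eauto.
  - intros [a h]. exists (inl a). exact h.
  - intros [a h]. exists (inr a). exact h.
Qed.

Section Sum.
Variables (t : vocab) (theta : Type) (alpha : WellOrder).
Hypothesis theta_inf : card_le nat theta.
Variable H : fsym t -> False.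

Section SumStep.
Variables (M1 M2 N1 N2 : structure t).

(* On a sum the components never interact, so a state of the sum game is just a pair of
   states of the component games. *)
Definition sum_state (s1 : state t alpha M1 N1) (s2 : state t alpha M2 N2) :
  state t alpha (sum_struct t H M1 M2) (sum_struct t H N1 N2) :=
  Build_state t alpha (sum_struct t H M1 M2) (sum_struct t H N1 N2) (sum_elim (sA1 s1) (sA1 s2)) (sum_elim (sA2 s1) (sA2 s2))
    (sum_elim (sh1 s1) (sh1 s2)) (sum_elim (sh2 s1) (sh2 s2)) (sum_rel (sg s1) (sg s2))
    (sbeta s1) (sn s1).

Definition sum_link St (s1 : state t alpha M1 N1) (s2 : state t alpha M2 N2) : Prop :=
  St = sum_state s1 s2 /\ sn s1 = sn s2 /\ sbeta s1 = sbeta s2.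

Lemma is_state_sum_state s1 s2 :
  is_state theta s1 -> is_state theta s2 -> sn s1 = sn s2 -> is_state theta (sum_state s1 s2).
Proof.
  intros [C11 [C21 [G1 [D11 [D21 [P1 [B11 B21]]]]]]] [C12 [C22 [G2 [D12 [D22 [P2 [B12 B22]]]]]]] En.
  split; [apply card_le_sum_elim; auto|]. split; [apply card_le_sum_elim; auto|].
  split; [exact (sum_rel_partial_inj _ _ G1 G2)|].
  split; [intros [a|a] [b|b] h; simpl in *; try contradiction; eauto|].
  split; [intros [a|a] [b|b] h; simpl in *; try contradiction; eauto|].
  split; [apply (preserves_qf_sum t H M1 M2 N1 N2 (sg s1) (sg s2)); auto; exact (sum_rel_partial_inj _ _ G1 G2)|].
  split; intros [a|a] [b|b] h; simpl in *; try contradiction; first [solve [eauto] | rewrite <- En in *; eauto].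
Qed.

Lemma sum_state_response s1 s2 beta' (A' : car M1 + car M2 -> Prop) s1' s2' :
  sn s1 = sn s2 ->
  iso_response theta s1 beta' (fun a => A' (inl a)) s1' ->
  iso_response theta s2 beta' (fun p => A' (inr p)) s2' ->
  iso_response theta (sum_state s1 s2) beta' A' (sum_state s1' s2').
Proof.
  intros En Hr1 Hr2.
  destruct_response Hr1 Is1 Hn1 Hb1 HA11 HA21 Hh11 Hh21 Hg1 HA1e1 HA2e1 Hnew1 Hdom1.
  destruct_response Hr2 Is2 Hn2 Hb2 HA12 HA22 Hh12 Hh22 Hg2 HA1e2 HA2e2 Hnew2 Hdom2.
  split; [apply is_state_sum_state; auto; congruence|].
  split; [exact Hn1|]. split; [exact Hb1|].
  split; [intros [a|p]; simpl; auto|]. split; [intros [b|q]; simpl; auto|].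
  split; [intros [a|p]; simpl; auto|]. split; [intros [b|q]; simpl; auto|].
  split; [intros [a|p] [b|q]; simpl; auto|].
  split; [intros [a|p]; simpl; auto|].
  split.
  { intro y. pose proof (sum_rel_rng (sg s1') (sg s2') y) as R.
    destruct y as [b|q]; simpl in *; [rewrite HA2e1|rewrite HA2e2]; tauto. }
  split; [intros [a|p]; simpl; [|rewrite En]; auto|].
  intro x. pose proof (sum_rel_dom (sg s1') (sg s2') x) as R.
  destruct x as [a|p]; simpl in *; [rewrite <- Hdom1|rewrite En, <- Hdom2]; tauto.
Qed.

End SumStep.

Lemma sum_answer (M1 M2 N1 N2 : structure t)
  (Q1 : state t alpha M1 N1 -> Prop) (Q2 : state t alpha M2 N2 -> Prop) :
  iso_can_answer t theta alpha M1 N1 Q1 -> iso_can_answer t theta alpha M2 N2 Q2 ->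
  iso_can_answer t theta alpha (sum_struct t H M1 M2) (sum_struct t H N1 N2)
    (combined t theta alpha (sum_struct t H) sum_link M1 M2 N1 N2 Q1 Q2).
Proof.
  intros HQ1 HQ2 St [HSt [s1 [s2 [Hq1 [Hs1 [Hq2 [Hs2 [-> [En Eb]]]]]]]]] beta' A' Hlt HA Hc.
  destruct (HQ1 s1 Hq1 beta' (fun a => A' (inl a))) as [s1' [Hr1 Hq1']].
  { exact Hlt. }
  { intros a Ha. apply (HA (inl a)), Ha. }
  { eapply card_le_trans; [|exact Hc]. exists (fun z => exist A' (inl (proj1_sig z)) (proj2_sig z)).
    intros [a h] [a' h'] E; inversion E; subst; f_equal; apply proof_irrelevance. }
  destruct (HQ2 s2 Hq2 beta' (fun p => A' (inr p))) as [s2' [Hr2 Hq2']].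
  { rewrite <- Eb. exact Hlt. }
  { intros p Hp. apply (HA (inr p)), Hp. }
  { eapply card_le_trans; [|exact Hc]. exists (fun z => exist A' (inr (proj1_sig z)) (proj2_sig z)).
    intros [a h] [a' h'] E; inversion E; subst; f_equal; apply proof_irrelevance. }
  pose proof (sum_state_response _ _ _ _ _ _ _ _ _ _ En Hr1 Hr2) as Hr.
  exists (sum_state M1 M2 N1 N2 s1' s2'). split; [exact Hr|].
  split; [exact (proj1 Hr)|]. exists s1', s2'.
  split; [exact Hq1'|split; [exact (proj1 Hr1)|split; [exact Hq2'|split; [exact (proj1 Hr2)|]]]].
  destruct Hr1 as [_ [Hn1 [Hb1 _]]], Hr2 as [_ [Hn2 [Hb2 _]]].
  split; [reflexivity|split; congruence].
Qed.

Lemma swap_sum_state (M1 M2 N1 N2 : structure t) s1 s2 :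
  swap (sum_state M1 M2 N1 N2 s1 s2) = sum_state N1 N2 M1 M2 (swap s1) (swap s2).
Proof.
  unfold swap, sum_state; simpl. f_equal.
  apply functional_extensionality; intros [b|b]; apply functional_extensionality; intros [a|a]; reflexivity.
Qed.

Lemma sum_link_swap (M1 M2 N1 N2 : structure t) St s1 s2 :
  sum_link M1 M2 N1 N2 St s1 s2 -> sum_link N1 N2 M1 M2 (swap St) (swap s1) (swap s2).
Proof. intros [-> [En Eb]]. split; [apply swap_sum_state|split; assumption]. Qed.

Lemma sum_link_start (M1 M2 N1 N2 : structure t) :
  sum_link M1 M2 N1 N2 (start_state t alpha _ _) (start_state t alpha _ _) (start_state t alpha _ _).
Proof.
  split; [|split; reflexivity]. unfold start_state, sum_state; simpl. f_equal.
  1-4: apply functional_extensionality; intros [a|a]; reflexivity.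
  apply functional_extensionality; intros [a|a]; apply functional_extensionality; intros [b|b]; reflexivity.
Qed.

Lemma qf_agree_sum (M1 M2 N1 N2 : structure t) :
  qf_agree t M1 N1 -> qf_agree t M2 N2 -> qf_agree t (sum_struct t H M1 M2) (sum_struct t H N1 N2).
Proof.
  intros H1 H2. apply (preserves_qf_sum t H M1 M2 N1 N2 (fun _ _ => False) (fun _ _ => False)); auto.
  - intros _ _ [].
  - split; intros; contradiction.
Qed.

Lemma E0_sum (M1 M2 N1 N2 : structure t) :
  E0 t theta alpha M1 N1 -> E0 t theta alpha M2 N2 ->
  E0 t theta alpha (sum_struct t H M1 M2) (sum_struct t H N1 N2).
Proof.
  exact (E0_op t theta alpha (sum_struct t H) sum_link sum_link_swap sum_link_start qf_agree_sum
           sum_answer M1 M2 N1 N2).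
Qed.

End Sum.

Section Copycat.
Variables (t : vocab) (theta : Type) (alpha : WellOrder).
Hypothesis theta_inf : card_le nat theta.
Variable M : structure t.

Definition copycat (s : state t alpha M M) : Prop :=
  is_state theta s /\ (forall x y, sg s x y -> x = y) /\
  (forall x, sA1 s x -> sh1 s x <= sn s) /\ (forall y, sA2 s y -> sh2 s y <= sn s).

Section CopycatStep.
Variables (s : state t alpha M M) (beta' : option (wcar alpha)) (A' : car M -> Prop).
Hypothesis Hs : copycat s.
Hypothesis HA' : forall x, sA1 s x -> A' x.
Hypothesis Hc' : card_le {x | A' x} theta.

Definition copy_h1 (x : car M) : nat :=
  match excluded_middle_informative (sA1 s x) with left _ => sh1 s x | right _ => S (sn s) end.

Definition copy_h2 (y : car M) : nat :=
  match excluded_middle_informative (sA2 s y) with left _ => sh2 s y | right _ => 0 end.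

Definition copy_next : state t alpha M M :=
  Build_state t alpha M M A' (fun y => sA2 s y \/ sA1 s y) copy_h1 copy_h2
    (fun x y => sA1 s x /\ x = y) beta' (S (sn s)).

Lemma copy_h1_le x : sA1 s x -> copy_h1 x = sh1 s x /\ sh1 s x <= sn s.
Proof.
  intro H. split; [unfold copy_h1; destruct excluded_middle_informative; [reflexivity|contradiction]|].
  exact (proj1 (proj2 (proj2 Hs)) x H).
Qed.

Lemma copy_h2_le y : sA2 s y -> copy_h2 y = sh2 s y /\ sh2 s y <= sn s.
Proof.
  intro H. split; [unfold copy_h2; destruct excluded_middle_informative; [reflexivity|contradiction]|].
  exact (proj2 (proj2 (proj2 Hs)) y H).
Qed.

Lemma copy_next_is_state : is_state theta copy_next.
Proof.
  destruct Hs as [HSt _]. destruct_state HSt C1 C2 Fg Ig D1 D2 P B1 B2.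
  split; [exact Hc'|]. split; [apply card_le_sig_or_absorb; auto|].
  split; [split; [intros x y y' [_ h] [_ h']|intros x x' y [_ h] [_ h']]; congruence|].
  split; [intros x y [h _]; apply HA', h|].
  split; [intros x y [h <-]; right; exact h|].
  split; [apply preserves_qf_diag; intros x y [_ e]; exact e|].
  split; intros x y [h <-]; simpl.
  - destruct (copy_h1_le x h) as [-> Hle]. lia.
  - unfold copy_h2. destruct excluded_middle_informative as [a|a]; [|lia].
    destruct (copy_h2_le x a) as [_ Hle]. lia.
Qed.

Lemma copy_next_response : iso_response theta s beta' A' copy_next.
Proof.
  destruct Hs as [HSt [Hid _]]. pose proof HSt as HStc. destruct_state HStc C1 C2 Fg Ig D1 D2 P B1 B2.
  split; [exact copy_next_is_state|]. do 2 (split; [reflexivity|]).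
  split; [exact HA'|]. split; [intros y h; left; exact h|].
  split; [intros x h; exact (proj1 (copy_h1_le x h))|].
  split; [intros y h; exact (proj1 (copy_h2_le y h))|].
  split; [intros x y h; simpl; split; [eapply D1; eauto|eapply Hid; eauto]|].
  split; [intro x; simpl; tauto|].
  split; [intro y; simpl; split; [intros [h|h]; [left|right; exists y]; auto|]|].
  { intros [h|[x [h <-]]]; [left|right]; auto. }
  split; [intros x _ h; simpl; unfold copy_h1; destruct excluded_middle_informative; [contradiction|lia]|].
  intro x; simpl. split; [intros [y [h _]]|intros [h _]; exists x; auto].
  split; [exact h|]. destruct (copy_h1_le x h). lia.
Qed.

Lemma copy_next_copycat : copycat copy_next.
Proof.
  split; [exact copy_next_is_state|]. split; [intros x y [_ e]; exact e|]. split; simpl.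
  - intros x _. unfold copy_h1. destruct excluded_middle_informative as [a|a]; [|lia].
    destruct (copy_h1_le x a). lia.
  - intros y _. unfold copy_h2. destruct excluded_middle_informative as [a|a]; [|lia].
    destruct (copy_h2_le y a). lia.
Qed.

End CopycatStep.

Lemma copycat_answer : iso_can_answer t theta alpha M M copycat.
Proof.
  intros s Hs beta' A' _ HA Hc. exists (copy_next s beta' A').
  split; [apply copy_next_response|apply copy_next_copycat]; assumption.
Qed.

Lemma swap_pred_copycat s : swap_pred t alpha M M copycat s <-> copycat s.
Proof.
  unfold swap_pred, copycat. rewrite is_state_swap_iff. simpl.
  split; intros [Is [Hid [H1 H2]]]; (split; [exact Is|split; [intros x y h; symmetry; eauto|auto]]).
Qed.

Lemma E0_refl : E0 t theta alpha M M.
Proof.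
  assert (Hstart : is_state theta (start_state t alpha M M)).
  { apply (is_state_start_iff t theta alpha). apply preserves_qf_diag. intros _ _ []. }
  apply (E0_of_invariant t theta alpha M M copycat copycat_answer); [|exact Hstart|].
  - apply (iso_can_answer_ext _ _ _ _ _ copycat); [intro s; symmetry; apply swap_pred_copycat|].
    exact copycat_answer.
  - split; [exact Hstart|]. simpl. split; [intros _ _ []|split; intros _ []].
Qed.

End Copycat.

Lemma olt_trans (W : WellOrder) a b c : olt W a b -> olt W b c -> olt W a c.
Proof.
  destruct a as [a|], b as [b|], c as [c|]; simpl; auto; try contradiction. apply wlt_trans.
Qed.

Lemma wlt_irrefl (W : WellOrder) x : ~ wlt W x x.
Proof. induction (wlt_wf W x) as [x _ IH]. intro H. exact (IH x H H). Qed.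

Lemma length_filter_lt {A : Type} (f g : A -> bool) (l : list A) :
  (forall y, f y = true -> g y = true) -> (exists y, In y l /\ g y = true /\ f y = false) ->
  length (filter f l) < length (filter g l).
Proof.
  intro Hfg.
  assert (Hle : forall l, length (filter f l) <= length (filter g l)).
  { intro l'; induction l' as [|a l' IH]; simpl; [lia|].
    destruct (f a) eqn:E; [rewrite (Hfg a E); simpl; lia|]. destruct (g a); simpl; lia. }
  induction l as [|a l IH]; intros [y [Hy [Hg Hf]]]; [destruct Hy|]. simpl.
  destruct Hy as [->|Hy].
  - rewrite Hg, Hf. specialize (Hle l). simpl. lia.
  - specialize (IH (ex_intro _ y (conj Hy (conj Hg Hf)))).
    destruct (f a) eqn:E; [rewrite (Hfg a E); simpl; lia|]. destruct (g a); simpl; lia.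
Qed.

Section Delay.
Variables (t : vocab) (theta : Type) (alpha : WellOrder).
Variable l : list (wcar alpha).
Hypothesis l_full : forall x, In x l.

(* The finite ordinal [b] as a natural number. *)
Definition ord_rank (b : option (wcar alpha)) : nat :=
  length (filter (fun y => if excluded_middle_informative (olt alpha (Some y) b) then true else false) l).

Lemma ord_rank_le b : ord_rank b <= length l.
Proof. apply filter_length_le. Qed.

Lemma ord_rank_lt b b' : olt alpha b' b -> ord_rank b' < ord_rank b.
Proof.
  intro H. apply length_filter_lt.
  - intro y. destruct (excluded_middle_informative (olt alpha (Some y) b')); [|discriminate].
    destruct excluded_middle_informative as [_|h]; [reflexivity|].
    exfalso. eauto using olt_trans.
  - destruct b' as [x|]; [|destruct b; contradiction].
    exists x. split; [apply l_full|].
    do 2 destruct excluded_middle_informative; try contradiction; split; auto.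
    exfalso. eapply wlt_irrefl; eauto.
Qed.

(* ISO never matches anything: every element gets a height beyond the number of moves
   that the ordinal clock still allows. *)
Definition delaying (M N : structure t) (s : state t alpha M N) : Prop :=
  is_state theta s /\ (forall x y, ~ sg s x y) /\
  (forall x, sA1 s x -> sn s + ord_rank (sbeta s) < sh1 s x) /\
  (forall y, sA2 s y -> sn s + ord_rank (sbeta s) < sh2 s y).

Lemma delaying_answer (M N : structure t) : iso_can_answer t theta alpha M N (delaying M N).
Proof.
  intros s [Is [Hg [Hh1 Hh2]]] beta' A' Hlt HA Hc.
  pose proof (ord_rank_lt _ _ Hlt) as Hd. pose proof (ord_rank_le beta') as Hd'.
  pose proof Is as Isc. destruct_state Isc C1 C2 Fg Ig D1 D2 P B1 B2.
  set (h1 := fun x => match excluded_middle_informative (sA1 s x) with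
                      | left _ => sh1 s x | right _ => S (sn s) + length l + 1 end).
  assert (Hh1' : forall x, sA1 s x -> h1 x = sh1 s x).
  { intros x h. unfold h1. destruct excluded_middle_informative; [reflexivity|contradiction]. }
  set (s' := Build_state t alpha M N A' (sA2 s) h1 (sh2 s) (fun _ _ => False) beta' (S (sn s))).
  assert (Is' : is_state theta s').
  { split; [exact Hc|split; [exact C2|]].
    split; [split; intros; contradiction|]. do 2 (split; [intros; contradiction|]).
    split; [apply (preserves_qf_mono t M N (sg s)); auto; intros _ _ []|split; intros _ _ []]. }
  exists s'. split.
  - split; [exact Is'|]. do 2 (split; [reflexivity|]).
    split; [exact HA|]. split; [intros y h; exact h|].
    split; [exact Hh1'|]. split; [intros y h; reflexivity|].
    split; [intros x y h; exfalso; eapply Hg; eauto|].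
    split; [intro x; simpl; tauto|].
    split; [intro y; simpl; split; [intro h; left; exact h|intros [h|[x []]]; exact h]|].
    split; [intros x _ h; simpl; unfold h1; destruct excluded_middle_informative; [contradiction|lia]|].
    intro x; simpl. split; [intros [y []]|intros [h hh]; specialize (Hh1 x h); lia].
  - split; [exact Is'|]. split; [intros x y hh; exact hh|]. split; simpl.
    + intros x _. unfold h1. destruct excluded_middle_informative as [a|a]; [|lia].
      specialize (Hh1 x a). lia.
    + intros y h. specialize (Hh2 y h). lia.
Qed.

Lemma E0_of_qf_agree (M N : structure t) : qf_agree t M N -> E0 t theta alpha M N.
Proof.
  intro Hag. apply (is_state_start_iff t theta alpha) in Hag.
  apply (E0_of_invariant t theta alpha M N (delaying M N)); [apply delaying_answer| |exact Hag|].
  - apply (iso_can_answer_ext _ _ _ _ _ (delaying N M)); [|apply delaying_answer].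
    intro u. unfold swap_pred, delaying. rewrite is_state_swap_iff. simpl.
    split; intros [Is [Hg [H1 H2]]]; (split; [exact Is|split; [intros x y h; exact (Hg _ _ h)|auto]]).
  - split; [exact Hag|]. simpl. split; [intros _ _ []|split; intros _ []].
Qed.

End Delay.

Section Agreement.
Variable t : vocab.

Lemma qf_agree_refl (M : structure t) : qf_agree t M M.
Proof. apply preserves_qf_diag. intros _ _ []. Qed.

Lemma qf_agree_sym (M N : structure t) : qf_agree t M N -> qf_agree t N M.
Proof. intro H. exact (preserves_qf_flip t _ _ _ H). Qed.

Lemma qf_agree_trans (M N P : structure t) : qf_agree t M N -> qf_agree t N P -> qf_agree t M P.
Proof.
  intros H1 H2 k phi a c Hac.
  set (b := fun i => False_rect (car N) (Hac i)).
  rewrite (H1 k phi a b Hac). exact (H2 k phi b c Hac).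
Qed.

Lemma E1_qf_agree (theta : Type) (alpha : WellOrder) (M N : structure t) :
  E1 t theta alpha M N -> qf_agree t M N.
Proof.
  induction 1 as [M N [Is _]|M|M N _ IH|M N P _ IH1 _ IH2].
  - exact (proj1 (is_state_start_iff t theta alpha M N) Is).
  - apply qf_agree_refl.
  - apply qf_agree_sym, IH.
  - eapply qf_agree_trans; eauto.
Qed.

End Agreement.

Section Closure.
Variables (t : vocab) (theta : Type) (alpha : WellOrder).
Hypothesis alpha_le_theta : card_le (wcar alpha) theta.

Lemma E1_iff_qf_agree_of_finite (M N : structure t) :
  ~ card_le nat theta -> E1 t theta alpha M N <-> qf_agree t M N.
Proof.
  intro Hfin. split; [apply E1_qf_agree|intro Hag].
  destruct (listable_of_not_card_le_nat (wcar alpha)) as [l Hl].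
  { intro H. apply Hfin. eapply card_le_trans; eassumption. }
  apply rst_step. exact (E0_of_qf_agree t theta alpha l Hl M N Hag).
Qed.

Lemma E1_map (F : structure t -> structure t) (M N : structure t) :
  (forall M N, E0 t theta alpha M N -> E0 t theta alpha (F M) (F N)) ->
  E1 t theta alpha M N -> E1 t theta alpha (F M) (F N).
Proof.
  intros HF H. induction H as [M N H|M|M N _ IH|M N P _ IH1 _ IH2].
  - apply rst_step, HF, H.
  - apply rst_refl.
  - apply rst_sym, IH.
  - eapply rst_trans; eauto.
Qed.

Lemma E1_op (op : structure t -> structure t -> structure t) :
  (card_le nat theta -> forall M1 M2 N1 N2,
     E0 t theta alpha M1 N1 -> E0 t theta alpha M2 N2 -> E0 t theta alpha (op M1 M2) (op N1 N2)) ->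
  (forall M1 M2 N1 N2, qf_agree t M1 N1 -> qf_agree t M2 N2 -> qf_agree t (op M1 M2) (op N1 N2)) ->
  forall M1 M2 N1 N2,
    E1 t theta alpha M1 N1 -> E1 t theta alpha M2 N2 -> E1 t theta alpha (op M1 M2) (op N1 N2).
Proof.
  intros HE0 Hag M1 M2 N1 N2 H1 H2.
  destruct (classic (card_le nat theta)) as [Hinf|Hfin].
  - apply rst_trans with (op N1 M2).
    + apply (E1_map (fun M => op M M2)); auto.
      intros M N h. apply HE0; auto. apply E0_refl, Hinf.
    + apply (E1_map (fun M => op N1 M)); auto.
      intros M N h. apply HE0; auto. apply E0_refl, Hinf.
  - apply (E1_iff_qf_agree_of_finite _ _ Hfin), Hag; apply (E1_iff_qf_agree_of_finite _ _ Hfin); auto.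
Qed.

Lemma E1_prod (M1 M2 N1 N2 : structure t) :
  E1 t theta alpha M1 N1 -> E1 t theta alpha M2 N2 ->
  E1 t theta alpha (prod_struct t M1 M2) (prod_struct t N1 N2).
Proof. apply E1_op; [exact (E0_prod t theta alpha)|exact (qf_agree_prod t)]. Qed.

Lemma E1_sum (H : fsym t -> False) (M1 M2 N1 N2 : structure t) :
  E1 t theta alpha M1 N1 -> E1 t theta alpha M2 N2 ->
  E1 t theta alpha (sum_struct t H M1 M2) (sum_struct t H N1 N2).
Proof.
  apply E1_op; [intro Hinf; exact (E0_sum t theta alpha Hinf H)|exact (qf_agree_sum t H)].
Qed.

End Closure.

Section Logic.
Variables (t : vocab) (K : Type).

Local Notation E1_reduct psi M N :=
  (E1 (subvoc t (s_SP psi) (s_SF psi)) (s_theta psi) (s_alpha psi)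
      (reduct t (s_SP psi) (s_SF psi) M) (reduct t (s_SP psi) (s_SF psi) N)).

(* The reduct of [M] is the only listed model of an L^1 sentence with the parameters of [psi]. *)
Lemma L1_equiv_E1_reduct (M N : structure t) (psi : L1sent t K) :
  L1_equiv t K M N -> E1_reduct psi M N.
Proof.
  intro HE.
  set (psi' := Build_L1sent t K (s_theta psi) (s_theta_lt t K psi) (s_SP psi) (s_SF psi)
                 (s_voc_card t K psi) (s_alpha psi) (s_alpha_lt t K psi) unit
                 (ex_intro _ (fun _ _ => True) (fun x y _ => match x, y with tt, tt => eq_refl end))
                 (fun _ => reduct t (s_SP psi) (s_SF psi) M)).
  assert (HM : L1sat t K M psi') by (exists tt; apply rst_refl).
  destruct (proj1 (HE psi') HM) as [i Hi]. apply rst_sym. exact Hi.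
Qed.

Lemma L1_equiv_of_E1_reduct (M N : structure t) :
  (forall psi : L1sent t K, E1_reduct psi M N) -> L1_equiv t K M N.
Proof.
  intros HE psi. split; intros [i Hi]; exists i.
  - eapply rst_trans; [apply rst_sym, HE|exact Hi].
  - eapply rst_trans; [apply HE|exact Hi].
Qed.

End Logic.

Theorem theorem3p14 (K : Type) (HK : beth_fixed_point K) (t : vocab) :
  (forall M1 M2 N1 N2 : structure t,
      L1_equiv t K M1 N1 -> L1_equiv t K M2 N2 ->
      L1_equiv t K (prod_struct t M1 M2) (prod_struct t N1 N2)) /\
  (forall (theta : Type) (alpha : WellOrder),
      card_lt theta K -> card_le (wcar alpha) theta ->
      forall M1 M2 N1 N2 : structure t,
      E1 t theta alpha M1 N1 -> E1 t theta alpha M2 N2 ->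
      E1 t theta alpha (prod_struct t M1 M2) (prod_struct t N1 N2)) /\
  (forall H : fsym t -> False,
      (forall M1 M2 N1 N2 : structure t,
          L1_equiv t K M1 N1 -> L1_equiv t K M2 N2 ->
          L1_equiv t K (sum_struct t H M1 M2) (sum_struct t H N1 N2)) /\
      (forall (theta : Type) (alpha : WellOrder),
          card_lt theta K -> card_le (wcar alpha) theta ->
          forall M1 M2 N1 N2 : structure t,
          E1 t theta alpha M1 N1 -> E1 t theta alpha M2 N2 ->
          E1 t theta alpha (sum_struct t H M1 M2) (sum_struct t H N1 N2))).
Proof.
  split; [|split; [|intro H; split]].
  - intros M1 M2 N1 N2 HE1 HE2. apply L1_equiv_of_E1_reduct. intro psi.
    exact (E1_prod _ _ _ (s_alpha_lt t K psi) _ _ _ _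
             (L1_equiv_E1_reduct t K _ _ psi HE1) (L1_equiv_E1_reduct t K _ _ psi HE2)).
  - intros theta alpha _ Hal. apply E1_prod, Hal.
  - intros M1 M2 N1 N2 HE1 HE2. apply L1_equiv_of_E1_reduct. intro psi.
    exact (E1_sum _ _ _ (s_alpha_lt t K psi) (fun f : fsym (subvoc t (s_SP psi) (s_SF psi)) => H (proj1_sig f)) _ _ _ _
             (L1_equiv_E1_reduct t K _ _ psi HE1) (L1_equiv_E1_reduct t K _ _ psi HE2)).
  - intros theta alpha _ Hal. apply E1_sum, Hal.
Qed.
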